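(* Let $N\ge2$, $p,q>0$ with $p+q=1$, and let $x_1\le\cdots\le x_N$ and $y_1\le\cdots\le y_N$ be integers. Let $\sigma\in\mathbb{S}_N$ and suppose that some entry $\beta$ appears in position $\beta-1$ of $\sigma$ (i.e. $\sigma(\beta-1)=\beta$) and all entries preceding $\beta$ are less than $\beta$. Then $I(\sigma)=0$, where $$I(\sigma)=\int_{\mathcal{C}_r}\cdots\int_{\mathcal{C}_r}A_\sigma\prod_{i=1}^N\xi_{\sigma(i)}^{\,x_i-y_{\sigma(i)}-1}\,d\xi_1\cdots d\xi_N$$ with $A_\sigma=\prod_{(\beta',\alpha')}S_{\beta'\alpha'}$ over all inversions $(\beta',\alpha')$ of $\sigma$, $S_{\beta'\alpha'}=-\frac{\xi_{\alpha'}}{\xi_{\beta'}}\cdot\frac{p+q\xi_{\alpha'}\xi_{\beta'}-\xi_{\beta'}}{p+q\xi_{\alpha'}\xi_{\beta'}-\xi_{\alpha'}}$ (the AZRP $S$-matrix), and $\mathcal{C}_r$ a circle centered at $0$ of sufficiently small radius $r$ that all poles of the integrand other than $0$ lie outside it.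
   Context: Permutations are in one-line notation $\sigma(1)\cdots\sigma(N)$; an inversion $(b,a)$ is a pair of entries with $b>a$ and $b$ to the left of $a$ in $\sigma$. Each $d\xi_j$ includes the factor $\frac{1}{2\pi i}$. *)

From Stdlib Require Import Reals ZArith.
From Coquelicot Require Import Coquelicot.
From mathcomp Require Import ssreflect ssrfun ssrbool eqtype ssrnat seq fintype fingroup perm.

Set Implicit Arguments.
Unset Strict Implicit.
Unset Printing Implicit Defensive.

Open Scope R_scope.

Fixpoint Cpow (z : C) (n : nat) : C :=
  match n with O => RtoC 1 | S n' => Cmult z (Cpow z n') end.

Definition Cpowz (z : C) (k : Z) : C :=
  match k with
  | Z0 => RtoC 1
  | Zpos m => Cpow z (Pos.to_nat m)
  | Zneg m => Cinv (Cpow z (Pos.to_nat m))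
  end.

Definition Cprod (l : seq C) : C := foldr Cmult (RtoC 1) l.

(* (1/(2 pi i)) \oint_{|z| = r} f(z) dz, counterclockwise, parametrised by
   z = r e^{i t}, dz = i r e^{i t} dt, t in [0, 2 pi]. *)
Definition circle_int (r : R) (f : C -> C) : C :=
  Cdiv (RInt (V := C_R_CompleteNormedModule)
          (fun t => Cmult (f (r * cos t, r * sin t)%R) (- r * sin t, r * cos t)%R)
          0 (2 * PI))
       (0, 2 * PI)%R.

Definition upd (xi : nat -> C) (k : nat) (z : C) : nat -> C :=
  fun j => if j == k then z else xi j.

(* iterated integral over the variables listed (first = outermost) *)
Fixpoint circ_iter (r : R) (vars : seq nat) (F : (nat -> C) -> C) (xi : nat -> C) : C :=
  match vars with
  | [::] => F xi
  | v :: vs => circle_int r (fun z => circ_iter r vs F (upd xi v z))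
  end.

(* Indices are 0-based: variable xi_k (k = 0..N-1) stands for the paper's xi_{k+1};
   a permutation s : 'S_N in one-line notation has entry s i at position i. *)

Definition Smat (p q : R) (xi : nat -> C) (b a : nat) : C :=
  let xa := xi a in let xb := xi b in
  Cmult (Copp (Cdiv xa xb))
        (Cdiv (Cplus (RtoC p) (Cminus (Cmult (RtoC q) (Cmult xa xb)) xb))
              (Cplus (RtoC p) (Cminus (Cmult (RtoC q) (Cmult xa xb)) xa))).

Definition inv_pos (N : nat) (s : 'S_N) : seq ('I_N * 'I_N) :=
  [seq ij <- [seq (i, j) | i <- enum 'I_N, j <- enum 'I_N]
     | ((ij : 'I_N * 'I_N).1 < ij.2)%N && (s ij.2 < s ij.1)%N].

Definition Asig (N : nat) (p q : R) (s : 'S_N) (xi : nat -> C) : C :=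
  Cprod [seq Smat p q xi (s ij.1) (s ij.2) | ij : 'I_N * 'I_N <- inv_pos s].

Definition integrand (N : nat) (p q : R) (x y : 'I_N -> Z) (s : 'S_N)
    (xi : nat -> C) : C :=
  Cmult (Asig p q s xi)
        (Cprod [seq Cpowz (xi (s i)) (x i - y (s i) - 1)%Z | i <- enum 'I_N]).

(* I(sigma) with contour C_r; d xi_1 innermost, d xi_N outermost *)
Definition Isig (N : nat) (p q : R) (x y : 'I_N -> Z) (s : 'S_N) (r : R) : C :=
  circ_iter r (rev (iota 0 N)) (integrand p q x y s) (fun _ => RtoC 0).

From Pilot Require Import Defs.
From Stdlib Require Import Reals ZArith Lra Lia FunctionalExtensionality.
From Coquelicot Require Import Coquelicot.
From mathcomp Require Import ssreflect ssrfun ssrbool eqtype ssrnat seq fintype fingroup perm.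
From mathcomp Require Import zify.
Import Defs.
Set Implicit Arguments.
Unset Strict Implicit.
Open Scope R_scope.

(* Let [beta = sigma(i)] and [alpha = sigma(k)]: the [i] entries before position
   [i] are all the values below [beta] but one, [alpha], which sits at the only
   later position [k] holding a value below [beta]. Hence [(beta, alpha)] is the
   only inversion containing [beta], the other inversions containing [alpha] are
   of the form [(gamma, alpha)], and the rest of the integrand involves neither
   [xi_beta] nor [xi_alpha].
   Write [S_{beta alpha} = -(xi_alpha / xi_beta) (1 + (xi_alpha - xi_beta) / D)]
   with [D = p - xi_alpha + q xi_alpha xi_beta], and expand [1 / D] geometrically
   in [xi_beta]. This splits the integrand into terms [xi_beta ^ e * phi] with
   [phi] free of [xi_beta], plus a remainder. A term with [e <> -1] dies in the
   [xi_beta]-integral, since the circle integral of [z ^ e] is [0]. For [e = -1],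
   and for the remainder once the expansion is long enough, [x_i <= x_k] and
   [y_alpha <= y_beta] make the power of [xi_alpha] nonnegative; the factor is
   then holomorphic in [xi_alpha] on the disc (its other poles lie outside for
   small [r]) and its [xi_alpha]-integral, taken inside the [xi_beta]-integral,
   vanishes by Cauchy's theorem. Holomorphy is encoded as uniform approximation
   by polynomials on the circle; keeping every integrand bounded and Lipschitz on
   the torus makes iterated circle integrals linear. *)

(** * Circle integrals *)

Definition circ_pt (r t : R) : C := (r * cos t, r * sin t).
Definition circ_tan (r t : R) : C := (- r * sin t, r * cos t).

Definition circ_integrand (r : R) (f : C -> C) (t : R) : C :=
  Cmult (f (circ_pt r t)) (circ_tan r t).

Lemma circle_intE r f : circle_int r f =
  Cdiv (RInt (V := C_R_CompleteNormedModule) (circ_integrand r f) 0 (2 * PI)) (0, 2 * PI).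
Proof. by []. Qed.

Lemma circ_tanE r t : circ_tan r t = Cmult Ci (circ_pt r t).
Proof. rewrite /circ_tan /circ_pt /Ci /Cmult /=; f_equal; ring. Qed.

Lemma Cmod_circ_pt r t : 0 <= r -> Cmod (circ_pt r t) = r.
Proof.
move=> hr; rewrite /Cmod /circ_pt /=.
have -> : (r * cos t) ^ 2 + (r * sin t) ^ 2 = r ^ 2 * (Rsqr (sin t) + Rsqr (cos t))
  by rewrite /Rsqr; ring.
by rewrite sin2_cos2 Rmult_1_r sqrt_pow2.
Qed.

Lemma Cmod_circ_tan r t : 0 <= r -> Cmod (circ_tan r t) = r.
Proof. by move=> hr; rewrite circ_tanE Cmod_mult Cmod_Ci Rmult_1_l Cmod_circ_pt. Qed.

Lemma Cmod_RtoC_pos (a : R) : 0 <= a -> Cmod (RtoC a) = a.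
Proof. by move=> h; rewrite Cmod_R Rabs_right; lra. Qed.

Lemma Cmod_fst_le (z : C) : Rabs (fst z) <= Cmod z.
Proof. by have := Rmax_Cmod z; have := Rmax_l (Rabs (fst z)) (Rabs (snd z)); lra. Qed.

Lemma Cmod_snd_le (z : C) : Rabs (snd z) <= Cmod z.
Proof. by have := Rmax_Cmod z; have := Rmax_r (Rabs (fst z)) (Rabs (snd z)); lra. Qed.

Lemma Cmod_pair_le (a b : R) : Cmod (a, b) <= Rabs a + Rabs b.
Proof.
have -> : ((a, b) : C) = Cplus (RtoC a) (Cmult Ci (RtoC b))
  by rewrite /Cplus /Cmult /Ci /RtoC /=; f_equal; ring.
by apply: Rle_trans (Cmod_triangle _ _) _; rewrite Cmod_mult Cmod_Ci !Cmod_R; lra.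
Qed.

Lemma continuity_pt_cst (c x : R) : continuity_pt (fun _ => c) x.
Proof. exact: continuity_pt_const. Qed.

Definition ccontinuity (F : R -> C) :=
  forall t, continuity_pt (fun t => fst (F t)) t /\ continuity_pt (fun t => snd (F t)) t.

Definition cont_on_circle (r : R) (f : C -> C) := ccontinuity (fun t => f (circ_pt r t)).

Lemma ccontinuity_const c : ccontinuity (fun _ => c).
Proof. by move=> t; split; apply: continuity_pt_cst. Qed.

Lemma ccontinuity_plus F G : ccontinuity F -> ccontinuity G ->
  ccontinuity (fun t => Cplus (F t) (G t)).
Proof. by move=> HF HG t; case: (HF t) (HG t) => ? ? [? ?]; split; apply: continuity_pt_plus. Qed.

Lemma ccontinuity_mult F G : ccontinuity F -> ccontinuity G ->
  ccontinuity (fun t => Cmult (F t) (G t)).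
Proof.
move=> HF HG t; case: (HF t) (HG t) => ? ? [? ?] /=.
by split; [apply: continuity_pt_minus | apply: continuity_pt_plus];
  apply: continuity_pt_mult.
Qed.

Lemma ccontinuity_circ_tan r : ccontinuity (circ_tan r).
Proof.
move=> t; split; apply: continuity_pt_mult (continuity_pt_cst _ _) _;
  [exact: continuity_sin | exact: continuity_cos].
Qed.

Lemma ccontinuity_circ_integrand r f : cont_on_circle r f -> ccontinuity (circ_integrand r f).
Proof. by move=> Hf; apply: ccontinuity_mult Hf (ccontinuity_circ_tan r). Qed.

Lemma cont_on_circle_plus r f g : cont_on_circle r f -> cont_on_circle r g ->
  cont_on_circle r (fun z => Cplus (f z) (g z)).
Proof. exact: ccontinuity_plus. Qed.

Lemma cont_on_circle_scal r c f : cont_on_circle r f ->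
  cont_on_circle r (fun z => Cmult c (f z)).
Proof. exact: ccontinuity_mult (ccontinuity_const c). Qed.

Lemma cont_on_circle_minus r f g : cont_on_circle r f -> cont_on_circle r g ->
  cont_on_circle r (fun z => Cminus (f z) (g z)).
Proof.
move=> Hf Hg; have -> : (fun z => Cminus (f z) (g z)) =
    (fun z => Cplus (f z) (Cmult (RtoC (-1)) (g z))).
  by apply: functional_extensionality => z; rewrite /Cminus; ring.
exact: cont_on_circle_plus Hf (cont_on_circle_scal _ Hg).
Qed.

Lemma ex_RInt_continuity f a b : (forall t, continuity_pt f t) -> ex_RInt f a b.
Proof.
move=> Hf; apply: (ex_RInt_continuous (V := R_CompleteNormedModule)) => t _.
exact/continuity_pt_filterlim.
Qed.

Lemma RInt_C_components (F : R -> C) a b : ccontinuity F ->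
  RInt (V := C_R_CompleteNormedModule) F a b =
  (RInt (fun t => fst (F t)) a b, RInt (fun t => snd (F t)) a b).
Proof.
move=> HF; apply: is_RInt_unique.
by apply: (is_RInt_fct_extend_pair (U := R_NormedModule) (V := R_NormedModule));
  apply: (RInt_correct (V := R_CompleteNormedModule)); apply: ex_RInt_continuity => t;
  case: (HF t).
Qed.

Lemma RInt_lin_comb (a b : R) f g x y :
  (forall t, continuity_pt f t) -> (forall t, continuity_pt g t) ->
  RInt (fun t => a * f t + b * g t) x y = a * RInt f x y + b * RInt g x y.
Proof.
move=> Hf Hg.
have Ef := ex_RInt_continuity x y Hf; have Eg := ex_RInt_continuity x y Hg.
rewrite (RInt_plus (V := R_CompleteNormedModule) (fun t => scal a (f t)) (fun t => scal b (g t)));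
  try by apply: (ex_RInt_scal (V := R_CompleteNormedModule)).
by rewrite !(RInt_scal (V := R_CompleteNormedModule)).
Qed.

Section CircleIntegral.

Variable r : R.

Let I1 f := RInt (fun t => fst (circ_integrand r f t)) 0 (2 * PI).
Let I2 f := RInt (fun t => snd (circ_integrand r f t)) 0 (2 * PI).

Lemma circle_int_components f : cont_on_circle r f ->
  circle_int r f = Cdiv (I1 f, I2 f) (0, 2 * PI).
Proof.
by move=> Hf; rewrite circle_intE RInt_C_components //; apply: ccontinuity_circ_integrand.
Qed.

Lemma circ_integrand_components f : cont_on_circle r f ->
  (forall t, continuity_pt (fun t => fst (circ_integrand r f t)) t) /\
  (forall t, continuity_pt (fun t => snd (circ_integrand r f t)) t).
Proof. by move=> Hf; split=> t; case: (ccontinuity_circ_integrand Hf t). Qed.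

Lemma circle_int_plus f g : cont_on_circle r f -> cont_on_circle r g ->
  circle_int r (fun z => Cplus (f z) (g z)) = Cplus (circle_int r f) (circle_int r g).
Proof.
move=> Hf Hg; rewrite !circle_int_components //; last exact: cont_on_circle_plus.
have [F1 F2] := circ_integrand_components Hf; have [G1 G2] := circ_integrand_components Hg.
have -> : I1 (fun z => Cplus (f z) (g z)) = 1 * I1 f + 1 * I1 g.
  by rewrite /I1 -RInt_lin_comb //; apply: RInt_ext => t _; rewrite /circ_integrand /=; ring.
have -> : I2 (fun z => Cplus (f z) (g z)) = 1 * I2 f + 1 * I2 g.
  by rewrite /I2 -RInt_lin_comb //; apply: RInt_ext => t _; rewrite /circ_integrand /=; ring.
by rewrite /Cdiv !Rmult_1_l; apply: injective_projections => /=; field; apply: PI_neq0.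
Qed.

Lemma circle_int_scal c f : cont_on_circle r f ->
  circle_int r (fun z => Cmult c (f z)) = Cmult c (circle_int r f).
Proof.
move=> Hf; rewrite !circle_int_components //; last exact: cont_on_circle_scal.
have [F1 F2] := circ_integrand_components Hf.
case: c => c1 c2.
have -> : I1 (fun z => Cmult (c1, c2) (f z)) = c1 * I1 f + (- c2) * I2 f.
  by rewrite /I1 -RInt_lin_comb //; apply: RInt_ext => t _; rewrite /circ_integrand /=; ring.
have -> : I2 (fun z => Cmult (c1, c2) (f z)) = c2 * I1 f + c1 * I2 f.
  by rewrite /I2 -RInt_lin_comb //; apply: RInt_ext => t _; rewrite /circ_integrand /=; ring.
by rewrite /Cdiv; apply: injective_projections => /=; field; apply: PI_neq0.
Qed.

End CircleIntegral.

Lemma circle_int_minus r f g : cont_on_circle r f -> cont_on_circle r g ->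
  circle_int r (fun z => Cminus (f z) (g z)) = Cminus (circle_int r f) (circle_int r g).
Proof.
move=> Hf Hg; have E u v : Cminus u v = Cplus u (Cmult (RtoC (-1)) v) by rewrite /Cminus; ring.
under [X in circle_int r X]functional_extensionality => z do rewrite E.
by rewrite circle_int_plus ?circle_int_scal ?E //; apply: cont_on_circle_scal.
Qed.

Lemma circle_int_ext r f g : 0 <= r -> (forall z, Cmod z = r -> f z = g z) ->
  circle_int r f = circle_int r g.
Proof.
move=> hr Hfg; rewrite !circle_intE; do 2 f_equal.
by apply: functional_extensionality => t; rewrite /circ_integrand Hfg // Cmod_circ_pt.
Qed.

(* The ML inequality; the factor 2 (rather than 1) comes from bounding the two
   components separately. *)
Lemma circle_int_bound r f B : 0 <= r -> cont_on_circle r f ->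
  (forall z, Cmod z = r -> Cmod (f z) <= B) -> Cmod (circle_int r f) <= 2 * r * B.
Proof.
move=> hr Hf HB.
have Hint t : Cmod (circ_integrand r f t) <= r * B.
  rewrite /circ_integrand Cmod_mult Cmod_circ_tan //.
  by have := HB _ (Cmod_circ_pt t hr); have := Cmod_ge_0 (f (circ_pt r t)); nra.
have HPI := PI_RGT_0.
have [F1 F2] := circ_integrand_components Hf.
have E1 : Rabs (RInt (fun t => fst (circ_integrand r f t)) 0 (2 * PI)) <= (2 * PI - 0) * (r * B).
  apply: abs_RInt_le_const; [lra | exact: ex_RInt_continuity | move=> t _].
  by apply: Rle_trans (Hint t); apply: Cmod_fst_le.
have E2 : Rabs (RInt (fun t => snd (circ_integrand r f t)) 0 (2 * PI)) <= (2 * PI - 0) * (r * B).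
  apply: abs_RInt_le_const; [lra | exact: ex_RInt_continuity | move=> t _].
  by apply: Rle_trans (Hint t); apply: Cmod_snd_le.
rewrite circle_int_components // Cmod_div; last by case; lra.
have -> : Cmod (0, 2 * PI) = 2 * PI.
  by rewrite /Cmod /= (_ : _ + _ = (2 * PI) ^ 2) ?sqrt_pow2 //=; [lra | ring].
apply: (Rmult_le_reg_r (2 * PI)); first lra.
rewrite /Rdiv Rmult_assoc Rinv_l ?Rmult_1_r; last lra.
by apply: Rle_trans (Cmod_pair_le _ _) _; nra.
Qed.

Lemma circle_int_0 r : 0 <= r -> circle_int r (fun _ => RtoC 0) = RtoC 0.
Proof.
move=> hr; apply: Cmod_eq_0; apply: Rle_antisym; last exact: Cmod_ge_0.
have := @circle_int_bound r (fun _ => RtoC 0) 0 hr (ccontinuity_const _).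
by rewrite Rmult_0_r; apply=> z _; rewrite Cmod_0; lra.
Qed.

Lemma cos_sin_2PI_mult (k : Z) : cos (IZR k * (2 * PI)) = 1 /\ sin (IZR k * (2 * PI)) = 0.
Proof.
have Hnat (n : nat) : cos (INR n * (2 * PI)) = 1 /\ sin (INR n * (2 * PI)) = 0.
  rewrite (_ : INR n * (2 * PI) = 0 + 2 * INR n * PI); last ring.
  by rewrite cos_period sin_period cos_0 sin_0.
case: k => [|n|n]; first by rewrite Rmult_0_l cos_0 sin_0.
- by rewrite -positive_nat_Z -INR_IZR_INZ.
- rewrite -Pos2Z.opp_pos opp_IZR -positive_nat_Z -INR_IZR_INZ -Ropp_mult_distr_l.
  by rewrite cos_neg sin_neg; case: (Hnat (Pos.to_nat n)) => -> ->; split; [|ring].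
Qed.

Lemma continuity_pt_trig_lin (k a b x : R) :
  continuity_pt (fun t => a * cos (k * t) + b * sin (k * t)) x.
Proof.
have Hk : continuity_pt (fun t => k * t) x
  by apply: continuity_pt_mult (continuity_pt_cst _ _) (continuity_pt_id _).
apply: continuity_pt_plus; apply: continuity_pt_mult (continuity_pt_cst _ _) _;
  apply: continuity_pt_comp Hk _; [exact: continuity_cos | exact: continuity_sin].
Qed.

Lemma RInt_trig_period (k : Z) (a b : R) : k <> 0%Z ->
  RInt (fun t => a * cos (IZR k * t) + b * sin (IZR k * t)) 0 (2 * PI) = 0.
Proof.
move=> /not_0_IZR Hk; apply: is_RInt_unique.
set F := fun t => (a * sin (IZR k * t) - b * cos (IZR k * t)) / IZR k.
have HF0 : minus (F (2 * PI)) (F 0) = 0.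
  have [Hc Hs] := cos_sin_2PI_mult k.
  by rewrite /F /minus /plus /opp /= Rmult_0_r Rmult_comm Hc Hs cos_0 sin_0; field.
rewrite -{2}HF0; apply: (is_RInt_derive (V := R_CompleteNormedModule) F) => t _.
- by rewrite /F; auto_derive => //; field.
- exact/continuity_pt_filterlim/continuity_pt_trig_lin.
Qed.

Lemma Cpow_circ_pt r t n : Cpow (circ_pt r t) n = (r ^ n * cos (INR n * t), r ^ n * sin (INR n * t)).
Proof.
elim: n => [|n IH]; cbn [Cpow]; first by rewrite Rmult_0_l cos_0 sin_0 /RtoC; f_equal; ring.
rewrite IH S_INR /circ_pt /Cmult /= (_ : (INR n + 1) * t = INR n * t + t); last ring.
by rewrite cos_plus sin_plus; f_equal; ring.
Qed.

Lemma Cpowz_circ_pt r t e : 0 < r ->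
  Cpowz (circ_pt r t) e = (powerRZ r e * cos (IZR e * t), powerRZ r e * sin (IZR e * t)).
Proof.
move=> hr; case: e => [|n|n]; cbn [Cpowz powerRZ]; first by rewrite Rmult_0_l cos_0 sin_0 /RtoC; f_equal; ring.
  by rewrite Cpow_circ_pt -positive_nat_Z -INR_IZR_INZ.
rewrite Cpow_circ_pt -Pos2Z.opp_pos opp_IZR -positive_nat_Z -INR_IZR_INZ -Ropp_mult_distr_l.
set n' := Pos.to_nat n; set a := INR n' * t.
have hn : r ^ n' <> 0 by apply: pow_nonzero; lra.
have Hsq : (r ^ n' * cos a) ^ 2 + (r ^ n' * sin a) ^ 2 = (r ^ n') ^ 2.
  by rewrite -[RHS]Rmult_1_r -(sin2_cos2 a) /Rsqr; ring.
by rewrite /Cinv /= cos_neg sin_neg Hsq; f_equal; field.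
Qed.

Lemma cont_on_circle_Cpowz r e : 0 < r -> cont_on_circle r (fun z => Cpowz z e).
Proof.
move=> hr; rewrite /cont_on_circle.
have -> : (fun s => Cpowz (circ_pt r s) e) =
    (fun s => (powerRZ r e * cos (IZR e * s), powerRZ r e * sin (IZR e * s))).
  by apply: functional_extensionality => s; rewrite Cpowz_circ_pt.
move=> t /=; split.
- have := continuity_pt_trig_lin (IZR e) (powerRZ r e) 0 t.
  by apply: continuity_pt_ext => s; ring.
- have := continuity_pt_trig_lin (IZR e) 0 (powerRZ r e) t.
  by apply: continuity_pt_ext => s; ring.
Qed.

Lemma circle_int_Cpowz r e : 0 < r -> e <> (-1)%Z ->
  circle_int r (fun z => Cpowz z e) = RtoC 0.
Proof.
move=> hr he; have he1 : (e + 1 <> 0)%Z by lia.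
rewrite circle_int_components; last exact: cont_on_circle_Cpowz.
set K := powerRZ r e * r.
have Hcs s : cos (IZR (e + 1) * s) = cos (IZR e * s + s) /\ sin (IZR (e + 1) * s) = sin (IZR e * s + s).
  by rewrite plus_IZR Rmult_plus_distr_r Rmult_1_l.
rewrite (RInt_ext (fun s => fst (circ_integrand r (fun z => Cpowz z e) s))
    (fun s => 0 * cos (IZR (e + 1) * s) + (- K) * sin (IZR (e + 1) * s))); last first.
  move=> s _; rewrite /circ_integrand Cpowz_circ_pt // /circ_tan /=.
  by case: (Hcs s) => _ ->; rewrite sin_plus /K; ring.
rewrite (RInt_ext (fun s => snd (circ_integrand r (fun z => Cpowz z e) s))
    (fun s => K * cos (IZR (e + 1) * s) + 0 * sin (IZR (e + 1) * s))); last first.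
  move=> s _; rewrite /circ_integrand Cpowz_circ_pt // /circ_tan /=.
  by case: (Hcs s) => -> _; rewrite cos_plus /K; ring.
by rewrite !RInt_trig_period // /Cdiv Cmult_0_l.
Qed.

Lemma continuity_pt_dominated (h g : R -> R) t0 L : continuity_pt g t0 -> g t0 = 0 ->
  (forall s, Rabs (h s - h t0) <= L * g s) -> continuity_pt h t0.
Proof.
move=> Hg Hg0 H eps heps.
have HL := Rabs_pos L.
have [alp [halp Ha]] := Hg (eps / (Rabs L + 1)) ltac:(apply: Rdiv_lt_0_compat; lra).
exists alp; split => // s Hs.
have := Ha s Hs; rewrite /dist /= /R_dist Hg0 Rminus_0_r => Hgs.
have := H s; have := Rle_abs (g s).
have : L * g s <= Rabs L * Rabs (g s) by rewrite -Rabs_mult; apply: Rle_abs.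
have : Rabs L * Rabs (g s) <= Rabs L * (eps / (Rabs L + 1)) by apply: Rmult_le_compat_l; lra.
have : Rabs L * (eps / (Rabs L + 1)) < eps.
  by apply: (Rmult_lt_reg_r (Rabs L + 1)); [lra | field_simplify; lra].
lra.
Qed.

Lemma cont_on_circle_lipschitz r f L : 0 <= L ->
  (forall s t, Cmod (Cminus (f (circ_pt r s)) (f (circ_pt r t))) <=
               L * Cmod (Cminus (circ_pt r s) (circ_pt r t))) ->
  cont_on_circle r f.
Proof.
move=> HL Hf t0.
set g := fun s => Rabs (r * cos s - r * cos t0) + Rabs (r * sin s - r * sin t0).
have Hg : continuity_pt g t0.
  by apply: continuity_pt_plus; apply: continuity_pt_comp (Rcontinuity_abs _);
    apply: continuity_pt_minus (continuity_pt_cst _ _);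
    apply: continuity_pt_mult (continuity_pt_cst _ _) _;
    [exact: continuity_cos | exact: continuity_sin].
have Hg0 : g t0 = 0 by rewrite /g !Rminus_diag Rabs_R0; lra.
have Hfg s : Cmod (Cminus (f (circ_pt r s)) (f (circ_pt r t0))) <= L * g s.
  apply: Rle_trans (Hf s t0) _; apply: Rmult_le_compat_l => //.
  exact: (Cmod_pair_le (r * cos s - r * cos t0) (r * sin s - r * sin t0)).
split; apply: (continuity_pt_dominated Hg Hg0) => s; apply: Rle_trans (Hfg s).
- exact: (Cmod_fst_le (Cminus _ _)).
- exact: (Cmod_snd_le (Cminus _ _)).
Qed.

(** * Functions on the torus and iterated integrals *)

Lemma upd_same xi k z : upd xi k z k = z.
Proof. by rewrite /upd eqxx. Qed.

Lemma upd_other xi k z j : j <> k -> upd xi k z j = xi j.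
Proof. by move=> H; rewrite /upd; case: eqP. Qed.

Fixpoint torus_dist (n : nat) (xi xi' : nat -> C) : R :=
  if n is n'.+1 then Cmod (Cminus (xi n') (xi' n')) + torus_dist n' xi xi' else 0.

Lemma torus_dist_ge0 n xi xi' : 0 <= torus_dist n xi xi'.
Proof. by elim: n => [|n IH] /=; [lra | have := Cmod_ge_0 (Cminus (xi n) (xi' n)); lra]. Qed.

Lemma torus_distC n xi xi' : torus_dist n xi xi' = torus_dist n xi' xi.
Proof.
elim: n => [|n IH] //=; rewrite IH -Cmod_opp; congr (Cmod _ + _).
by rewrite /Cminus; ring.
Qed.

Lemma Cmod_sub_le_torus_dist n xi xi' j : (j < n)%N ->
  Cmod (Cminus (xi j) (xi' j)) <= torus_dist n xi xi'.
Proof.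
elim: n => [|n IH] // /=; rewrite ltnS leq_eqVlt => /orP [/eqP ->|Hj].
- by have := torus_dist_ge0 n xi xi'; lra.
- by have := IH Hj; have := Cmod_ge_0 (Cminus (xi n) (xi' n)); lra.
Qed.

Lemma torus_dist_upd n xi xi' v z : torus_dist n (upd xi v z) (upd xi' v z) <= torus_dist n xi xi'.
Proof.
elim: n => [|n IH] /=; first lra.
rewrite {1 2}/upd; case: eqP => _; last lra.
rewrite (_ : Cminus z z = RtoC 0) ?Cmod_0; last by rewrite /Cminus; ring.
by have := Cmod_ge_0 (Cminus (xi n) (xi' n)); lra.
Qed.

Lemma torus_dist_upd_var n xi v z w : torus_dist n (upd xi v z) (upd xi v w) <= Cmod (Cminus z w).
Proof.
suff : torus_dist n (upd xi v z) (upd xi v w) <= if (v < n)%N then Cmod (Cminus z w) else 0.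
  by case: ifP => _ //; have := Cmod_ge_0 (Cminus z w); lra.
elim: n => [|n IH] /=; first lra.
rewrite {1 2}/upd ltnS leq_eqVlt; case: eqP => [E|Hn].
- by subst v; move: IH; rewrite eqxx ltnn /=; lra.
- rewrite (_ : Cminus (xi n) (xi n) = RtoC 0) ?Cmod_0; last by rewrite /Cminus; ring.
  have -> : (v == n) = false by apply/eqP => E; apply: Hn.
  by rewrite /=; lra.
Qed.

Lemma Cmod_Cpow z n : Cmod (Cpow z n) = Cmod z ^ n.
Proof. by elim: n => [|n IH] /=; rewrite ?Cmod_1 // Cmod_mult IH. Qed.

Lemma Cpow_add z a b : Cpow z (a + b) = Cmult (Cpow z a) (Cpow z b).
Proof. by elim: a => [|a IH]; rewrite ?add0n ?addSn; cbn [Cpow]; rewrite ?IH; ring. Qed.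

Lemma Cpow_mult a b n : Cpow (Cmult a b) n = Cmult (Cpow a n) (Cpow b n).
Proof. by elim: n => [|n IH]; cbn [Cpow]; rewrite ?IH; ring. Qed.

Lemma Cpow_neq0 z n : z <> RtoC 0 -> Cpow z n <> RtoC 0.
Proof.
move=> Hz; elim: n => [|n IH] /=; last exact: Cmult_neq_0.
by move=> E; injection E; lra.
Qed.

Lemma Cpow_inv z n : z <> RtoC 0 -> Cinv (Cpow z n) = Cpow (Cinv z) n.
Proof.
move=> Hz; elim: n => [|n IH]; cbn [Cpow]; first by field.
by rewrite -IH; field; split => //; apply: Cpow_neq0.
Qed.

Definition indep (j : nat) (A : (nat -> C) -> C) := forall xi z, A (upd xi j z) = A xi.

Lemma circ_iter_cat r vs1 vs2 G xi :
  circ_iter r (vs1 ++ vs2) G xi = circ_iter r vs1 (circ_iter r vs2 G) xi.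
Proof.
elim: vs1 xi => [|v vs IH] xi //=; congr (circle_int r _).
by apply: functional_extensionality => z; apply: IH.
Qed.

Lemma circ_iter_agree r vs G xi xi' : (forall j, j \notin vs -> xi j = xi' j) ->
  circ_iter r vs G xi = circ_iter r vs G xi'.
Proof.
elim: vs xi xi' => [|v vs IH] xi xi' H /=.
  by congr G; apply: functional_extensionality => j; apply: H.
congr (circle_int r _); apply: functional_extensionality => z; apply: IH => j Hj.
rewrite /upd; case: eqP => // E; apply: H.
by rewrite inE negb_or Hj andbT; apply/eqP.
Qed.

Lemma circ_iter_indep r vs G j : indep j G -> indep j (circ_iter r vs G).
Proof.
move=> HG; elim: vs => [|v vs IH] xi z //=; congr (circle_int r _).
apply: functional_extensionality => w; case: (eqVneq j v) => [<-|E].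
  by congr (circ_iter _ _ _ _); apply: functional_extensionality => k; rewrite /upd; case: eqP.
rewrite -(IH (upd xi v w) z); congr (circ_iter _ _ _ _).
apply: functional_extensionality => k; rewrite /upd.
by case: eqP => [->|//]; case: eqP => // E2; rewrite E2 eqxx in E.
Qed.

Section Torus.

Variables (N : nat) (r : R).
Hypothesis r_pos : 0 < r.

Definition on_torus (xi : nat -> C) := forall j, (j < N)%N -> Cmod (xi j) = r.

Lemma on_torus_upd xi v z : on_torus xi -> Cmod z = r -> on_torus (upd xi v z).
Proof. by move=> H Hz j hj; rewrite /upd; case: eqP => _; auto. Qed.

Lemma on_torus_neq0 xi j : (j < N)%N -> on_torus xi -> xi j <> RtoC 0.
Proof. by move=> hj D E; have := D j hj; rewrite E Cmod_0; lra. Qed.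

(* The regularity that survives circle integration in any variable. *)
Definition bounded_lipschitz (G : (nat -> C) -> C) := exists B L, 0 <= L /\
  forall xi xi', on_torus xi -> on_torus xi' ->
  Cmod (G xi) <= B /\ Cmod (Cminus (G xi) (G xi')) <= L * torus_dist N xi xi'.

Lemma bounded_lipschitz_cont G xi v : bounded_lipschitz G -> on_torus xi ->
  cont_on_circle r (fun z => G (upd xi v z)).
Proof.
move=> [B [L [HL H]]] Hxi; apply: (cont_on_circle_lipschitz HL) => s t.
have hr : 0 <= r by lra.
have [_ H'] := H _ _ (on_torus_upd v Hxi (Cmod_circ_pt s hr)) (on_torus_upd v Hxi (Cmod_circ_pt t hr)).
by apply: Rle_trans H' _; apply: Rmult_le_compat_l => //; apply: torus_dist_upd_var.
Qed.

Lemma bounded_lipschitz_circle_int G v : bounded_lipschitz G ->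
  bounded_lipschitz (fun xi => circle_int r (fun z => G (upd xi v z))).
Proof.
move=> HG; have [B [L [HL H]]] := HG; have hr : 0 <= r by lra.
exists (2 * r * B), (2 * r * L); split; first nra.
move=> xi xi' Hxi Hxi'.
have C1 := bounded_lipschitz_cont v HG Hxi; have C2 := bounded_lipschitz_cont v HG Hxi'.
split.
- apply: circle_int_bound => // z Hz.
  by case: (H _ _ (on_torus_upd v Hxi Hz) (on_torus_upd v Hxi Hz)).
- rewrite -circle_int_minus // (_ : 2 * r * L * _ = 2 * r * (L * torus_dist N xi xi')); last ring.
  apply: circle_int_bound => //; first exact: cont_on_circle_minus.
  move=> z Hz; have [_ Hd] := H _ _ (on_torus_upd v Hxi Hz) (on_torus_upd v Hxi' Hz).
  by apply: Rle_trans Hd _; apply: Rmult_le_compat_l => //; apply: torus_dist_upd.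
Qed.

Lemma bounded_lipschitz_circ_iter G vs : bounded_lipschitz G ->
  bounded_lipschitz (circ_iter r vs G).
Proof. by move=> HG; elim: vs => [|v vs IH] //=; apply: bounded_lipschitz_circle_int. Qed.

Lemma bounded_lipschitz_ext G G' : bounded_lipschitz G ->
  (forall xi, on_torus xi -> G xi = G' xi) -> bounded_lipschitz G'.
Proof.
move=> [B [L [HL H]]] E; exists B, L; split => // xi xi' D D'.
by rewrite -(E xi D) -(E xi' D'); apply: H.
Qed.

Lemma bounded_lipschitz_const c : bounded_lipschitz (fun _ => c).
Proof.
exists (Cmod c), 0; split; first lra; move=> xi xi' _ _; split; first lra.
by rewrite (_ : Cminus c c = RtoC 0) ?Cmod_0; [lra | rewrite /Cminus; ring].
Qed.

Lemma bounded_lipschitz_coord j : (j < N)%N -> bounded_lipschitz (fun xi => xi j).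
Proof.
move=> Hj; exists r, 1; split; first lra; move=> xi xi' D D'; split.
- by rewrite D //; lra.
- by rewrite Rmult_1_l; apply: Cmod_sub_le_torus_dist.
Qed.

Lemma bounded_lipschitz_plus G1 G2 : bounded_lipschitz G1 -> bounded_lipschitz G2 ->
  bounded_lipschitz (fun xi => Cplus (G1 xi) (G2 xi)).
Proof.
move=> [B1 [L1 [HL1 H1]]] [B2 [L2 [HL2 H2]]].
exists (B1 + B2), (L1 + L2); split; first lra; move=> xi xi' D D'.
have [H1a H1b] := H1 _ _ D D'; have [H2a H2b] := H2 _ _ D D'; split.
- by apply: Rle_trans (Cmod_triangle _ _) _; lra.
- rewrite (_ : Cminus _ _ = Cplus (Cminus (G1 xi) (G1 xi')) (Cminus (G2 xi) (G2 xi')));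
    last by rewrite /Cminus; ring.
  by apply: Rle_trans (Cmod_triangle _ _) _; lra.
Qed.

Lemma bounded_lipschitz_mult G1 G2 : bounded_lipschitz G1 -> bounded_lipschitz G2 ->
  bounded_lipschitz (fun xi => Cmult (G1 xi) (G2 xi)).
Proof.
move=> [B1 [L1 [HL1 H1]]] [B2 [L2 [HL2 H2]]].
exists (B1 * B2), (Rabs B1 * L2 + Rabs B2 * L1); split.
  by have := Rabs_pos B1; have := Rabs_pos B2; nra.
move=> xi xi' D D'.
have [H1a H1b] := H1 _ _ D D'; have [H2a H2b] := H2 _ _ D D'.
have [H2a' _] := H2 _ _ D' D'.
have := Cmod_ge_0 (G1 xi); have := Cmod_ge_0 (G2 xi'); have := Rle_abs B1; have := Rle_abs B2.
have := torus_dist_ge0 N xi xi'; move=> Hd HB2 HB1 HG2 HG1; split.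
  by rewrite Cmod_mult; apply: Rmult_le_compat => //; apply: Cmod_ge_0.
rewrite (_ : Cminus _ _ = Cplus (Cmult (G1 xi) (Cminus (G2 xi) (G2 xi')))
                               (Cmult (G2 xi') (Cminus (G1 xi) (G1 xi'))));
  last by rewrite /Cminus; ring.
apply: Rle_trans (Cmod_triangle _ _) _; rewrite !Cmod_mult.
have E1 : Cmod (G1 xi) * Cmod (Cminus (G2 xi) (G2 xi')) <= Rabs B1 * (L2 * torus_dist N xi xi')
  by apply: Rmult_le_compat => //; try apply: Cmod_ge_0; lra.
have E2 : Cmod (G2 xi') * Cmod (Cminus (G1 xi) (G1 xi')) <= Rabs B2 * (L1 * torus_dist N xi xi')
  by apply: Rmult_le_compat => //; try apply: Cmod_ge_0; lra.
nra.
Qed.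

Lemma bounded_lipschitz_opp G : bounded_lipschitz G -> bounded_lipschitz (fun xi => Copp (G xi)).
Proof.
move=> HG; apply: (bounded_lipschitz_ext (bounded_lipschitz_mult (bounded_lipschitz_const (Copp (RtoC 1))) HG)).
by move=> xi _; ring.
Qed.

Lemma bounded_lipschitz_minus G1 G2 : bounded_lipschitz G1 -> bounded_lipschitz G2 ->
  bounded_lipschitz (fun xi => Cminus (G1 xi) (G2 xi)).
Proof. by move=> H1 H2; apply: bounded_lipschitz_plus H1 (bounded_lipschitz_opp H2). Qed.

Lemma bounded_lipschitz_inv G d : 0 < d -> bounded_lipschitz G ->
  (forall xi, on_torus xi -> d <= Cmod (G xi)) -> bounded_lipschitz (fun xi => Cinv (G xi)).
Proof.
move=> hd [B [L [HL H]]] Hlow.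
exists (/ d), (L / (d * d)); split.
  by apply: Rmult_le_pos => //; apply/Rlt_le/Rinv_0_lt_compat; nra.
move=> xi xi' D D'.
have h1 := Hlow _ D; have h2 := Hlow _ D'.
have n1 : G xi <> RtoC 0 by move=> E; rewrite E Cmod_0 in h1; lra.
have n2 : G xi' <> RtoC 0 by move=> E; rewrite E Cmod_0 in h2; lra.
split; first by rewrite Cmod_inv //; apply: Rinv_le_contravar.
rewrite (_ : Cminus _ _ = Cdiv (Cminus (G xi') (G xi)) (Cmult (G xi) (G xi'))); last by field.
rewrite Cmod_div ?Cmod_mult; last exact: Cmult_neq_0.
have [_ HL'] := H _ _ D' D; rewrite torus_distC in HL'.
have Hd := torus_dist_ge0 N xi xi'.
have Hdd : d * d <= Cmod (G xi) * Cmod (G xi') by apply: Rmult_le_compat; lra.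
apply: (Rle_trans _ (L * torus_dist N xi xi' / (Cmod (G xi) * Cmod (G xi')))).
  by apply: Rmult_le_compat_r => //; apply/Rlt_le/Rinv_0_lt_compat; nra.
apply: (Rle_trans _ (L * torus_dist N xi xi' / (d * d))); last by right; field; lra.
by apply: Rmult_le_compat_l; [nra | apply: Rinv_le_contravar; nra].
Qed.

Lemma bounded_lipschitz_Cpow G n : bounded_lipschitz G ->
  bounded_lipschitz (fun xi => Cpow (G xi) n).
Proof.
move=> HG; elim: n => [|n IH] /=; first exact: bounded_lipschitz_const.
exact: bounded_lipschitz_mult.
Qed.

Lemma bounded_lipschitz_Cpowz_coord j e : (j < N)%N -> bounded_lipschitz (fun xi => Cpowz (xi j) e).
Proof.
move=> Hj; have HC := bounded_lipschitz_Cpow _ (bounded_lipschitz_coord Hj).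
case: e => [|n|n] /=; [exact: bounded_lipschitz_const | exact: HC |].
apply: (bounded_lipschitz_inv (d := r ^ Pos.to_nat n)); [exact: pow_lt | exact: HC |].
by move=> xi D; rewrite Cmod_Cpow D //; lra.
Qed.

Lemma bounded_lipschitz_Cprod (T : eqType) (l : seq T) (g : T -> (nat -> C) -> C) :
  (forall x, x \in l -> bounded_lipschitz (g x)) ->
  bounded_lipschitz (fun xi => Cprod [seq g x xi | x <- l]).
Proof.
elim: l => [|x l IH] H /=; first exact: bounded_lipschitz_const.
apply: bounded_lipschitz_mult; first by apply: H; rewrite inE eqxx.
by apply: IH => y Hy; apply: H; rewrite inE Hy orbT.
Qed.

Lemma circ_iter_ext vs G G' xi : (forall xi, on_torus xi -> G xi = G' xi) -> on_torus xi ->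
  circ_iter r vs G xi = circ_iter r vs G' xi.
Proof.
move=> HG; elim: vs xi => [|v vs IH] xi Hxi /=; first exact: HG.
by apply: circle_int_ext => [|z Hz]; [lra | apply: IH; apply: on_torus_upd].
Qed.

Lemma circ_iter_0 vs G xi : (forall xi, on_torus xi -> G xi = RtoC 0) -> on_torus xi ->
  circ_iter r vs G xi = RtoC 0.
Proof.
move=> HG; elim: vs xi => [|v vs IH] xi Hxi /=; first exact: HG.
rewrite -(@circle_int_0 r); last lra.
by apply: circle_int_ext => [|z Hz]; [lra | apply: IH; apply: on_torus_upd].
Qed.

Lemma circ_iter_plus vs G1 G2 xi : bounded_lipschitz G1 -> bounded_lipschitz G2 -> on_torus xi ->
  circ_iter r vs (fun xi => Cplus (G1 xi) (G2 xi)) xi =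
  Cplus (circ_iter r vs G1 xi) (circ_iter r vs G2 xi).
Proof.
move=> H1 H2; elim: vs xi => [|v vs IH] xi Hxi //=.
rewrite -circle_int_plus; try by apply: bounded_lipschitz_cont => //; apply: bounded_lipschitz_circ_iter.
by apply: circle_int_ext => [|z Hz]; [lra | apply: IH; apply: on_torus_upd].
Qed.

Lemma circ_iter_scal vs A G xi : bounded_lipschitz G -> {in vs, forall j, indep j A} ->
  on_torus xi ->
  circ_iter r vs (fun xi => Cmult (A xi) (G xi)) xi = Cmult (A xi) (circ_iter r vs G xi).
Proof.
move=> HG; elim: vs xi => [|v vs IH] xi HA Hxi //=.
rewrite -circle_int_scal; last by apply: bounded_lipschitz_cont => //; apply: bounded_lipschitz_circ_iter.
apply: circle_int_ext => [|z Hz]; first lra.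
rewrite IH ?HA ?mem_head //; last exact: on_torus_upd.
by move=> j Hj; apply: HA; rewrite inE Hj orbT.
Qed.

End Torus.

Arguments bounded_lipschitz_const {N r} c.
Arguments bounded_lipschitz_coord {N r j}.

(** * Polynomial approximation and Cauchy's theorem *)

(* A polynomial is a list of monomials (coefficient, exponent). *)
Definition peval (P : seq (C * nat)) (z : C) : C :=
  foldr (fun cn acc => Cplus (Cmult cn.1 (Cpow z cn.2)) acc) (RtoC 0) P.

Definition pmul (P1 P2 : seq (C * nat)) : seq (C * nat) :=
  [seq (Cmult a.1 b.1, (a.2 + b.2)%N) | a <- P1, b <- P2].

Lemma peval_cat P1 P2 z : peval (P1 ++ P2) z = Cplus (peval P1 z) (peval P2 z).
Proof. by elim: P1 => [|a P1 IH] /=; rewrite ?IH; ring. Qed.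

Lemma peval_pmul P1 P2 z : peval (pmul P1 P2) z = Cmult (peval P1 z) (peval P2 z).
Proof.
elim: P1 => [|a P1 IH] /=; first ring.
rewrite peval_cat -/(pmul P1 P2) IH.
have -> : peval [seq (Cmult a.1 b.1, (a.2 + b.2)%N) | b <- P2] z =
    Cmult (Cmult a.1 (Cpow z a.2)) (peval P2 z).
  by elim: P2 {IH} => [|b P2 IH2] /=; rewrite ?IH2 ?Cpow_add; ring.
ring.
Qed.

Lemma Cpowz_nat z n : Cpowz z (Z.of_nat n) = Cpow z n.
Proof. by case: n => [|n] //=; rewrite SuccNat2Pos.id_succ. Qed.

Lemma cont_on_circle_Cpow r n : 0 < r -> cont_on_circle r (fun z => Cpow z n).
Proof.
move=> hr; have := cont_on_circle_Cpowz (Z.of_nat n) hr.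
by rewrite /cont_on_circle; under [fun z => Cpowz _ _]functional_extensionality => z do rewrite Cpowz_nat.
Qed.

Lemma cont_on_circle_peval r P : 0 < r -> cont_on_circle r (peval P).
Proof.
move=> hr; elim: P => [|a P IH]; first exact: ccontinuity_const.
exact: (cont_on_circle_plus (cont_on_circle_scal _ (cont_on_circle_Cpow _ hr)) IH).
Qed.

Lemma circle_int_peval r P : 0 < r -> circle_int r (peval P) = RtoC 0.
Proof.
move=> hr; elim: P => [|a P IH] /=; first by apply: circle_int_0; lra.
rewrite (circle_int_plus (f := fun z => Cmult a.1 (Cpow z a.2)) (g := peval P));
  [| exact: cont_on_circle_scal (cont_on_circle_Cpow _ hr) | exact: cont_on_circle_peval].
rewrite IH circle_int_scal; last exact: cont_on_circle_Cpow.
under [fun z => Cpow z _]functional_extensionality => z do rewrite -Cpowz_nat.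
by rewrite circle_int_Cpowz //; [ring | lia].
Qed.

Lemma geometric_bound_eq0 x K : 0 <= x -> (forall M : nat, x <= K * (/ 2) ^ M) -> x = 0.
Proof.
move=> hx H; case: (Rle_lt_or_eq_dec 0 x hx) => // Hpos; exfalso.
have HK := Rabs_pos K.
have [|M HM] := pow_lt_1_zero (/ 2) ltac:(rewrite Rabs_right; lra) (x / (Rabs K + 1)).
  by apply: Rdiv_lt_0_compat; lra.
have H1 := HM M (le_n M); have H2 := H M.
have hp : 0 < (/ 2) ^ M by apply: pow_lt; lra.
rewrite Rabs_right in H1; last lra.
have : K * (/ 2) ^ M <= Rabs K * (/ 2) ^ M by apply: Rmult_le_compat_r; [lra | apply: Rle_abs].
have : Rabs K * (/ 2) ^ M < Rabs K * (x / (Rabs K + 1)) + x / (Rabs K + 1) * 1 by nra.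
have : Rabs K * (x / (Rabs K + 1)) + x / (Rabs K + 1) * 1 = x by field; lra.
lra.
Qed.

Section PolyApprox.

Variables (N : nat) (r : R).
Hypothesis r_pos : 0 < r.

(* Our stand-in for holomorphy in [xi j] on a neighbourhood of the closed disc:
   exactly what Cauchy's theorem needs. *)
Definition poly_approximable (j : nat) (G : (nat -> C) -> C) :=
  forall xi, on_torus N r xi -> exists K, 0 <= K /\ forall M : nat, exists P,
    forall z, Cmod z = r -> Cmod (Cminus (G (upd xi j z)) (peval P z)) <= K * (/ 2) ^ M.

Lemma circle_int_poly_approximable j G xi : bounded_lipschitz N r G -> poly_approximable j G ->
  on_torus N r xi -> circle_int r (fun z => G (upd xi j z)) = RtoC 0.
Proof.
move=> HG HP D; have hr : 0 <= r by lra.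
have [K [HK HM]] := HP xi D.
have HC := bounded_lipschitz_cont r_pos j HG D.
apply/Cmod_eq_0/(@geometric_bound_eq0 _ (2 * r * K)); first exact: Cmod_ge_0.
move=> M; have [P HPM] := HM M.
have -> : circle_int r (fun z => G (upd xi j z)) =
    circle_int r (fun z => Cminus (G (upd xi j z)) (peval P z)).
  by rewrite circle_int_minus ?circle_int_peval //; [rewrite /Cminus; ring | exact: cont_on_circle_peval].
rewrite Rmult_assoc; apply: circle_int_bound => //.
exact: cont_on_circle_minus HC (cont_on_circle_peval _ r_pos).
Qed.

Lemma poly_approximable_indep j G : indep j G -> poly_approximable j G.
Proof.
move=> HI xi D; exists 0; split; first lra; move=> M; exists [:: (G xi, 0%N)] => z _.
rewrite HI /= (_ : Cminus _ _ = RtoC 0) ?Cmod_0; [lra | rewrite /Cminus; ring].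
Qed.

Lemma poly_approximable_coord j : poly_approximable j (fun xi => xi j).
Proof.
move=> xi D; exists 0; split; first lra; move=> M; exists [:: (RtoC 1, 1%N)] => z _.
rewrite upd_same /= (_ : Cminus _ _ = RtoC 0) ?Cmod_0; [lra | rewrite /Cminus; ring].
Qed.

Lemma poly_approximable_ext j G G' : poly_approximable j G ->
  (forall xi, on_torus N r xi -> G xi = G' xi) -> poly_approximable j G'.
Proof.
move=> H E xi D; have [K [HK HM]] := H xi D; exists K; split => // M.
have [P HP] := HM M; exists P => z Hz.
by rewrite -E; [apply: HP | apply: on_torus_upd].
Qed.

Lemma poly_approximable_plus j G1 G2 : poly_approximable j G1 -> poly_approximable j G2 ->
  poly_approximable j (fun xi => Cplus (G1 xi) (G2 xi)).
Proof.
move=> H1 H2 xi D; have [K1 [HK1 HM1]] := H1 xi D; have [K2 [HK2 HM2]] := H2 xi D.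
exists (K1 + K2); split; first lra; move=> M.
have [P1 HP1] := HM1 M; have [P2 HP2] := HM2 M; exists (P1 ++ P2) => z Hz.
rewrite peval_cat (_ : Cminus _ _ = Cplus (Cminus (G1 (upd xi j z)) (peval P1 z))
                                      (Cminus (G2 (upd xi j z)) (peval P2 z)));
  last by rewrite /Cminus; ring.
by apply: Rle_trans (Cmod_triangle _ _) _; have := HP1 z Hz; have := HP2 z Hz; lra.
Qed.

Lemma poly_approximable_mult j G1 G2 : bounded_lipschitz N r G1 -> bounded_lipschitz N r G2 ->
  poly_approximable j G1 -> poly_approximable j G2 ->
  poly_approximable j (fun xi => Cmult (G1 xi) (G2 xi)).
Proof.
move=> [B1 [L1 [_ HB1]]] [B2 [L2 [_ HB2]]] H1 H2 xi D.
have [K1 [HK1 HM1]] := H1 xi D; have [K2 [HK2 HM2]] := H2 xi D.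
exists (Rabs B1 * K2 + (Rabs B2 + K2) * K1); split.
  by have := Rabs_pos B1; have := Rabs_pos B2; nra.
move=> M; have [P1 HP1] := HM1 M; have [P2 HP2] := HM2 M; exists (pmul P1 P2) => z Hz.
have Dz := on_torus_upd j D Hz.
have E1 := HP1 z Hz; have E2 := HP2 z Hz.
set g1 := G1 (upd xi j z) in E1 *; set g2 := G2 (upd xi j z) in E2 *.
have Hb1 : Cmod g1 <= Rabs B1 by apply: Rle_trans (proj1 (HB1 _ _ Dz Dz)) (Rle_abs _).
have Hb2 : Cmod g2 <= Rabs B2 by apply: Rle_trans (proj1 (HB2 _ _ Dz Dz)) (Rle_abs _).
have Hh : (/ 2) ^ M <= 1 by rewrite -(pow1 M); apply: pow_incr; lra.
have Hh0 : 0 <= (/ 2) ^ M by apply: pow_le; lra.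
have Hp2 : Cmod (peval P2 z) <= Rabs B2 + K2.
  rewrite (_ : peval P2 z = Cplus g2 (Copp (Cminus g2 (peval P2 z)))); last by rewrite /Cminus; ring.
  by apply: Rle_trans (Cmod_triangle _ _) _; rewrite Cmod_opp; nra.
rewrite peval_pmul (_ : Cminus _ _ = Cplus (Cmult g1 (Cminus g2 (peval P2 z)))
                                          (Cmult (peval P2 z) (Cminus g1 (peval P1 z))));
  last by rewrite /Cminus; ring.
apply: Rle_trans (Cmod_triangle _ _) _; rewrite !Cmod_mult.
have F1 : Cmod g1 * Cmod (Cminus g2 (peval P2 z)) <= Rabs B1 * (K2 * (/ 2) ^ M)
  by apply: Rmult_le_compat => //; apply: Cmod_ge_0.
have F2 : Cmod (peval P2 z) * Cmod (Cminus g1 (peval P1 z)) <= (Rabs B2 + K2) * (K1 * (/ 2) ^ M)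
  by apply: Rmult_le_compat => //; apply: Cmod_ge_0.
nra.
Qed.

End PolyApprox.

(* The truncated geometric series of 1 / (a + b z). *)
Definition geom_poly (a b : C) (M : nat) : seq (C * nat) :=
  [seq (Cdiv (Cpow (Copp b) n) (Cpow a n.+1), n) | n <- iota 0 M].

Lemma inv_affine_sub_geom_poly a b z M : a <> RtoC 0 -> Cplus a (Cmult b z) <> RtoC 0 ->
  Cminus (Cinv (Cplus a (Cmult b z))) (peval (geom_poly a b M) z) =
  Cdiv (Cpow (Copp (Cmult b z)) M) (Cmult (Cpow a M) (Cplus a (Cmult b z))).
Proof.
have H10 : RtoC 1 <> RtoC 0 by move=> E; injection E; lra.
move=> Ha HD; elim: M => [|M IH]; first by rewrite /= /Cdiv; field.
rewrite /geom_poly -addn1 iotaD map_cat peval_cat add0n -/(geom_poly a b M) /=.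
rewrite (_ : Cminus _ _ = Cminus (Cminus (Cinv (Cplus a (Cmult b z))) (peval (geom_poly a b M) z))
    (Cplus (Cmult (Cdiv (Cpow (Copp b) M) (Cmult a (Cpow a M))) (Cpow z M)) (RtoC 0)));
  last by rewrite /Cminus; ring.
rewrite IH addn1 (_ : Copp (Cmult b z) = Cmult (Copp b) z); last ring.
have HaM := @Cpow_neq0 a M Ha.
by rewrite !Cpow_mult /=; field.
Qed.

Section PolyApproxInv.

Variables (N : nat) (r : R).
Hypothesis r_pos : 0 < r.

Lemma poly_approximable_inv_affine j G :
  (forall xi, on_torus N r xi -> exists a b, a <> RtoC 0 /\ Cmod b * r <= Cmod a / 2 /\
     forall z, Cmod z = r -> G (upd xi j z) = Cplus a (Cmult b z)) ->
  poly_approximable N r j (fun xi => Cinv (G xi)).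
Proof.
move=> H xi D; have [a [b [Ha [Hab Hz]]]] := H xi D.
have Hpa : 0 < Cmod a by apply/Cmod_gt_0.
exists (2 / Cmod a); split; first by apply/Rlt_le/Rdiv_lt_0_compat; lra.
move=> M; exists (geom_poly a b M) => z Hzr.
have HDl : Cmod a / 2 <= Cmod (Cplus a (Cmult b z)).
  have := Cmod_triangle (Cplus a (Cmult b z)) (Copp (Cmult b z)).
  rewrite Cmod_opp Cmod_mult Hzr (_ : Cplus _ (Copp _) = a); [lra | ring].
have HD : Cplus a (Cmult b z) <> RtoC 0 by move=> E; rewrite E Cmod_0 in HDl; lra.
rewrite Hz // inv_affine_sub_geom_poly // Cmod_div; last by apply: Cmult_neq_0 => //; apply: Cpow_neq0.
rewrite Cmod_mult !Cmod_Cpow Cmod_opp Cmod_mult Hzr.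
have HaM : 0 < Cmod a ^ M by apply: pow_lt.
have Hb := Cmod_ge_0 b.
have E1 : (Cmod b * r) ^ M <= Cmod a ^ M * (/ 2) ^ M.
  by rewrite -Rpow_mult_distr; apply: pow_incr; split; nra.
apply: (Rle_trans _ ((Cmod a ^ M * (/ 2) ^ M) / (Cmod a ^ M * (Cmod a / 2)))); last by right; field; lra.
apply: Rmult_le_compat => //; first by have := pow_le (Cmod b * r) M; nra.
  by apply/Rlt_le/Rinv_0_lt_compat; nra.
by apply: Rinv_le_contravar; [nra | apply: Rmult_le_compat_l; lra].
Qed.

End PolyApproxInv.

Section Analytic.

Variables (N : nat) (r : R).
Hypothesis r_pos : 0 < r.

Definition analytic_in (j : nat) (G : (nat -> C) -> C) :=
  bounded_lipschitz N r G /\ poly_approximable N r j G.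

Lemma analytic_in_ext j G G' : analytic_in j G ->
  (forall xi, on_torus N r xi -> G xi = G' xi) -> analytic_in j G'.
Proof.
by move=> [H1 H2] E; split; [apply: bounded_lipschitz_ext H1 E | apply: poly_approximable_ext H2 E].
Qed.

Lemma analytic_in_indep j G : bounded_lipschitz N r G -> indep j G -> analytic_in j G.
Proof. by move=> HG HI; split => //; apply: poly_approximable_indep. Qed.

Lemma analytic_in_const j c : analytic_in j (fun _ => c).
Proof. exact: analytic_in_indep (bounded_lipschitz_const _) (fun _ _ => erefl). Qed.

Lemma analytic_in_coord j : (j < N)%N -> analytic_in j (fun xi => xi j).
Proof.
by move=> Hj; split; [apply: bounded_lipschitz_coord | apply: poly_approximable_coord].
Qed.

Lemma analytic_in_plus j G1 G2 : analytic_in j G1 -> analytic_in j G2 ->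
  analytic_in j (fun xi => Cplus (G1 xi) (G2 xi)).
Proof.
by move=> [? ?] [? ?]; split; [apply: bounded_lipschitz_plus | apply: poly_approximable_plus].
Qed.

Lemma analytic_in_mult j G1 G2 : analytic_in j G1 -> analytic_in j G2 ->
  analytic_in j (fun xi => Cmult (G1 xi) (G2 xi)).
Proof.
by move=> [? ?] [? ?]; split; [apply: bounded_lipschitz_mult | apply: poly_approximable_mult].
Qed.

Lemma analytic_in_opp j G : analytic_in j G -> analytic_in j (fun xi => Copp (G xi)).
Proof.
move=> HG; apply: (analytic_in_ext (analytic_in_mult (analytic_in_const j (Copp (RtoC 1))) HG)).
by move=> xi _; ring.
Qed.

Lemma analytic_in_Cpow j G n : analytic_in j G -> analytic_in j (fun xi => Cpow (G xi) n).
Proof.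
move=> HG; elim: n => [|n IH] /=; [exact: analytic_in_const | exact: analytic_in_mult].
Qed.

Lemma analytic_in_Cprod j (T : eqType) (l : seq T) (g : T -> (nat -> C) -> C) :
  (forall x, x \in l -> analytic_in j (g x)) ->
  analytic_in j (fun xi => Cprod [seq g x xi | x <- l]).
Proof.
elim: l => [|x l IH] H /=; first exact: analytic_in_const.
apply: analytic_in_mult; first by apply: H; rewrite inE eqxx.
by apply: IH => y Hy; apply: H; rewrite inE Hy orbT.
Qed.

Lemma analytic_in_inv_affine j G d : 0 < d -> bounded_lipschitz N r G ->
  (forall xi, on_torus N r xi -> d <= Cmod (G xi)) ->
  (forall xi, on_torus N r xi -> exists a b, a <> RtoC 0 /\ Cmod b * r <= Cmod a / 2 /\
     forall z, Cmod z = r -> G (upd xi j z) = Cplus a (Cmult b z)) ->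
  analytic_in j (fun xi => Cinv (G xi)).
Proof.
by move=> hd HG Hl Ha; split; [apply: bounded_lipschitz_inv hd HG Hl | apply: poly_approximable_inv_affine].
Qed.

End Analytic.

Arguments analytic_in_const {N r j} c.
Arguments analytic_in_coord {N r j}.

(** * Terms that vanish *)

Definition Csum (l : seq nat) (g : nat -> C) : C :=
  foldr (fun n acc => Cplus (g n) acc) (RtoC 0) l.

Definition fsum (l : seq nat) (f : nat -> (nat -> C) -> C) (xi : nat -> C) : C :=
  Csum l (fun n => f n xi).

Section Vanishing.

Variables (N : nat) (r : R) (b m : nat) (L2 L3 : seq nat) (H : (nat -> C) -> C).
Hypotheses (r_pos : 0 < r) (b_lt : (b < N)%N).
Hypotheses (b_notin : b \notin L2 ++ m :: L3) (m_notin : m \notin L3).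
Hypotheses (H_lip : bounded_lipschitz N r H) (H_b : indep b H) (H_m : indep m H).

Let b_neq_m : b <> m.
Proof. by move=> E; move: b_notin; rewrite E mem_cat mem_head orbT. Qed.

Definition vanishes (X : (nat -> C) -> C) := forall xi, on_torus N r xi ->
  circ_iter r (b :: L2 ++ m :: L3) (fun xi => Cmult (X xi) (H xi)) xi = RtoC 0.

Lemma vanishes_ext X X' : vanishes X -> (forall xi, on_torus N r xi -> X xi = X' xi) ->
  vanishes X'.
Proof.
move=> HX E xi D; rewrite -(HX xi D); apply: (@circ_iter_ext N r r_pos) D => xi' D'.
by rewrite E.
Qed.

Lemma vanishes_plus X1 X2 : bounded_lipschitz N r X1 -> bounded_lipschitz N r X2 ->
  vanishes X1 -> vanishes X2 -> vanishes (fun xi => Cplus (X1 xi) (X2 xi)).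
Proof.
move=> G1 G2 Z1 Z2 xi D.
rewrite (@circ_iter_ext N r r_pos _ _ ( fun xi => Cplus (Cmult (X1 xi) (H xi)) (Cmult (X2 xi) (H xi)))) //;
  last by move=> xi' _; ring.
have M1 := bounded_lipschitz_mult G1 H_lip; have M2 := bounded_lipschitz_mult G2 H_lip.
by rewrite (@circ_iter_plus N r r_pos _ _ _ _ M1 M2 D) Z1 // Z2 //; ring.
Qed.

Lemma vanishes_fsum l f : (forall n, n \in l -> bounded_lipschitz N r (f n) /\ vanishes (f n)) ->
  bounded_lipschitz N r (fsum l f) /\ vanishes (fsum l f).
Proof.
elim: l => [|n l IH] Hf.
  split; first exact: bounded_lipschitz_const.
  by move=> xi D; apply: (@circ_iter_0 N r r_pos) => // xi' _; rewrite /fsum /=; ring.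
have [G1 Z1] := Hf n (mem_head n l).
have [G2 Z2] : bounded_lipschitz N r (fsum l f) /\ vanishes (fsum l f).
  by apply: IH => k Hk; apply: Hf; rewrite inE Hk orbT.
by split; [apply: bounded_lipschitz_plus | apply: vanishes_plus].
Qed.

(* The outermost integral, over [xi b], is that of [z ^ e] times a constant. *)
Lemma vanishes_Cpowz_b phi e : bounded_lipschitz N r phi -> indep b phi -> e <> (-1)%Z ->
  vanishes (fun xi => Cmult (Cpowz (xi b) e) (phi xi)).
Proof.
move=> Hphi Hphib He xi D /=.
set c := circ_iter r (L2 ++ m :: L3) (fun xi => Cmult (phi xi) (H xi)) xi.
rewrite (@circle_int_ext r _ (fun z => Cmult c (Cpowz z e))); [|lra|].
  by rewrite circle_int_scal ?circle_int_Cpowz //; [ring | apply: cont_on_circle_Cpowz].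
move=> z Hz.
have Dz := on_torus_upd b D Hz.
rewrite (@circ_iter_ext N r r_pos _ _ (fun xi => Cmult (Cpowz (xi b) e) (Cmult (phi xi) (H xi))) _ _ Dz);
  last by move=> xi' _; ring.
rewrite (@circ_iter_scal N r r_pos) //.
- rewrite upd_same /c circ_iter_indep; first exact: Cmult_comm.
  move=> xi' w.
  by rewrite Hphib H_b.
- exact: bounded_lipschitz_mult.
- move=> j Hj xi' w; rewrite upd_other // => E; subst j.
  by move: b_notin; rewrite Hj.
Qed.

(* [X] is constant for the inner [L3]-integrals and [H] for the [xi m]-integral,
   which is therefore Cauchy's integral of [X]. *)
Lemma vanishes_analytic_m X : analytic_in N r m X -> {in L3, forall j, indep j X} ->
  vanishes X.
Proof.
move=> [GX HX] HI xi D.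
rewrite -cat_cons circ_iter_cat; apply: (@circ_iter_0 N r r_pos) => // xi' D' /=.
set K := circ_iter r L3 H xi'.
rewrite (@circle_int_ext r _ (fun z => Cmult K (X (upd xi' m z)))); [|lra|].
  rewrite circle_int_scal; last exact: (bounded_lipschitz_cont r_pos m GX D').
  by rewrite (circle_int_poly_approximable r_pos GX HX D'); ring.
move=> z Hz; rewrite (@circ_iter_scal N r r_pos) //; last exact: on_torus_upd.
by rewrite /K circ_iter_indep //; ring.
Qed.

Lemma vanishes_term phi e : bounded_lipschitz N r phi -> indep b phi ->
  {in L3, forall j, indep j phi} -> (e = (-1)%Z -> analytic_in N r m phi) ->
  bounded_lipschitz N r (fun xi => Cmult (Cpowz (xi b) e) (phi xi)) /\
  vanishes (fun xi => Cmult (Cpowz (xi b) e) (phi xi)).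
Proof.
move=> Hphi Hphib HphiL He.
split; first exact: bounded_lipschitz_mult (bounded_lipschitz_Cpowz_coord r_pos e b_lt) Hphi.
case: (Z.eq_dec e (-1)) => Hem; last exact: vanishes_Cpowz_b.
apply: vanishes_analytic_m.
  apply: analytic_in_mult _ (He Hem).
  apply: analytic_in_indep; first by apply: (bounded_lipschitz_Cpowz_coord r_pos e b_lt).
  by move=> xi z; rewrite upd_other.
move=> j Hj xi z; rewrite HphiL // upd_other // => E; subst j.
by move: b_notin; rewrite mem_cat inE Hj !orbT.
Qed.

End Vanishing.

(** * The S-matrix *)

(* The denominator of [S_{c a}], affine in [xi_a]. *)
Definition Sden (p q : R) (xi : nat -> C) (c a : nat) : C :=
  Cplus (RtoC p) (Cminus (Cmult (RtoC q) (Cmult (xi a) (xi c))) (xi a)).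

Lemma SmatE p q xi c a : xi c <> RtoC 0 -> Sden p q xi c a <> RtoC 0 ->
  Smat p q xi c a = Cmult (Copp (Cmult (xi a) (Cinv (xi c))))
    (Cplus (RtoC 1) (Cmult (Cminus (xi a) (xi c)) (Cinv (Sden p q xi c a)))).
Proof. by move=> Hc Hd; rewrite /Smat /Sden /Cdiv; field; split. Qed.

Section SMatrix.

Variables (N : nat) (p q r : R).
Hypotheses (p_pos : 0 < p) (q_pos : 0 < q) (pq1 : p + q = 1).
Hypotheses (r_pos : 0 < r) (r_le_p : r <= p / 4) (r_le_half : r <= 1 / 2).

Lemma Cmod_Sden_ge xi c a : (c < N)%N -> (a < N)%N -> on_torus N r xi ->
  p / 2 <= Cmod (Sden p q xi c a).
Proof.
move=> hc ha D; rewrite /Sden.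
have := Cmod_triangle (Cplus (RtoC p) (Cminus (Cmult (RtoC q) (Cmult (xi a) (xi c))) (xi a)))
          (Copp (Cminus (Cmult (RtoC q) (Cmult (xi a) (xi c))) (xi a))).
rewrite Cmod_opp (_ : Cplus (Cplus _ _) _ = RtoC p); last ring.
rewrite Cmod_RtoC_pos; last lra.
have : Cmod (Cminus (Cmult (RtoC q) (Cmult (xi a) (xi c))) (xi a)) <= q * (r * r) + r.
  apply: Rle_trans (Cmod_triangle _ _) _.
  by rewrite Cmod_opp !Cmod_mult !D // Cmod_RtoC_pos; lra.
have : q * (r * r) <= r * r by nra.
nra.
Qed.

Lemma Sden_neq0 xi c a : (c < N)%N -> (a < N)%N -> on_torus N r xi -> Sden p q xi c a <> RtoC 0.
Proof. by move=> hc ha D E; have := Cmod_Sden_ge hc ha D; rewrite E Cmod_0; lra. Qed.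

Lemma bounded_lipschitz_Sden c a : (c < N)%N -> (a < N)%N ->
  bounded_lipschitz N r (fun xi => Sden p q xi c a).
Proof.
move=> hc ha; apply: bounded_lipschitz_plus (bounded_lipschitz_const _) _.
apply: bounded_lipschitz_minus _ (bounded_lipschitz_coord ha).
apply: bounded_lipschitz_mult (bounded_lipschitz_const _) _.
exact: bounded_lipschitz_mult (bounded_lipschitz_coord ha) (bounded_lipschitz_coord hc).
Qed.

Lemma analytic_in_Sden_inv c a : (c < N)%N -> (a < N)%N -> c <> a ->
  analytic_in N r a (fun xi => Cinv (Sden p q xi c a)).
Proof.
move=> hc ha hca; apply: (analytic_in_inv_affine r_pos (d := p / 2)); first lra.
- exact: bounded_lipschitz_Sden.
- by move=> xi D; apply: Cmod_Sden_ge.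
move=> xi D; exists (RtoC p), (Cminus (Cmult (RtoC q) (xi c)) (RtoC 1)); split.
  by move=> E; injection E; lra.
split.
  rewrite Cmod_RtoC_pos; last lra.
  have : Cmod (Cminus (Cmult (RtoC q) (xi c)) (RtoC 1)) <= q * r + 1.
    apply: Rle_trans (Cmod_triangle _ _) _.
    by rewrite Cmod_opp Cmod_mult Cmod_1 D // Cmod_RtoC_pos; lra.
  have : q * r <= r by nra.
  by have := Cmod_ge_0 (Cminus (Cmult (RtoC q) (xi c)) (RtoC 1)); nra.
by move=> z _; rewrite /Sden upd_same upd_other //; rewrite /Cminus; ring.
Qed.

Lemma indep_Smat j c a : j <> c -> j <> a -> indep j (fun xi => Smat p q xi c a).
Proof. by move=> Hc Ha xi z; rewrite /Smat !upd_other //; apply: nesym. Qed.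

(* [S_{c a}] agrees on the torus with a combination of [xi_a], [1 / xi_c] and
   [1 / Sden c a], all analytic in [xi_a]. *)
Let Smat_alt c a xi := Cmult (Copp (Cmult (xi a) (Cinv (xi c))))
    (Cplus (RtoC 1) (Cmult (Cminus (xi a) (xi c)) (Cinv (Sden p q xi c a)))).

Let Smat_alt_eq c a xi : (c < N)%N -> (a < N)%N -> on_torus N r xi ->
  Smat_alt c a xi = Smat p q xi c a.
Proof.
move=> hc ha D; have Hc := on_torus_neq0 r_pos hc D; have Hd := Sden_neq0 hc ha D.
by rewrite SmatE.
Qed.

Lemma analytic_in_Smat c a : (c < N)%N -> (a < N)%N -> c <> a ->
  analytic_in N r a (fun xi => Smat p q xi c a).
Proof.
move=> hc ha hca; apply: (analytic_in_ext (G := Smat_alt c a)); last by move=> xi D; apply: Smat_alt_eq.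
have Hc : analytic_in N r a (fun xi => xi c).
  by apply: analytic_in_indep (bounded_lipschitz_coord hc) _ => xi z; rewrite upd_other.
have Hcinv : analytic_in N r a (fun xi => Cinv (xi c)).
  apply: analytic_in_indep => [|xi z]; last by rewrite upd_other.
  by apply: (bounded_lipschitz_inv (d := r)) (bounded_lipschitz_coord hc) _ => // xi D; rewrite D //; lra.
apply: analytic_in_mult; first exact/analytic_in_opp/analytic_in_mult/Hcinv/analytic_in_coord.
apply: analytic_in_plus (analytic_in_const _) _.
apply: analytic_in_mult (analytic_in_Sden_inv hc ha hca).
exact: analytic_in_plus (analytic_in_coord ha) (analytic_in_opp Hc).
Qed.

Lemma bounded_lipschitz_Smat c a : (c < N)%N -> (a < N)%N ->
  bounded_lipschitz N r (fun xi => Smat p q xi c a).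
Proof.
move=> hc ha; case: (eqVneq c a) => [<-|hca].
  apply: (bounded_lipschitz_ext (bounded_lipschitz_const (RtoC (-1)))) => xi D.
  have Hc := on_torus_neq0 r_pos hc D; have Hd := Sden_neq0 hc hc D.
  by rewrite /Smat /Cdiv; field; split.
have hca' : c <> a by apply/eqP.
by case: (analytic_in_Smat hc ha hca').
Qed.

End SMatrix.

(** * Geometric expansion of the leading factor *)

Lemma CpowzE z e :
  Cpowz z e = if (0 <=? e)%Z then Cpow z (Z.to_nat e) else Cinv (Cpow z (Z.to_nat (- e))).
Proof. by case: e. Qed.

Lemma Cpowz_succ z e : z <> RtoC 0 -> Cpowz z (e + 1) = Cmult z (Cpowz z e).
Proof.
move=> Hz; rewrite !CpowzE.
case: (Z.leb_spec 0 e) => He.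
  have -> : (0 <=? e + 1)%Z = true by apply/Z.leb_le; lia.
  by have -> : Z.to_nat (e + 1) = (Z.to_nat e).+1 by lia.
case: (Z.eq_dec e (-1)) => [->|Hm] /=; first by field.
have -> : (0 <=? e + 1)%Z = false by apply/Z.leb_gt; lia.
have -> : Z.to_nat (- e) = (Z.to_nat (- (e + 1))).+1 by lia.
by cbn [Cpow]; field; split => //; apply: Cpow_neq0.
Qed.

Lemma Cpowz_add_nat z e n : z <> RtoC 0 -> Cpowz z (e + Z.of_nat n) = Cmult (Cpowz z e) (Cpow z n).
Proof.
move=> Hz; elim: n => [|n IH]; first by rewrite Z.add_0_r /=; ring.
by rewrite Nat2Z.inj_succ Z.add_succ_r -Z.add_1_r Cpowz_succ // IH /=; ring.
Qed.

Lemma Cpowz_nonneg z e : (0 <= e)%Z -> Cpowz z e = Cpow z (Z.to_nat e).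
Proof. by case: e => [|n|n] //= _; rewrite Pos2Nat.id. Qed.

Lemma Csum_scal l g K : Csum l (fun n => Cmult K (g n)) = Cmult K (Csum l g).
Proof. by elim: l => [|n l IH] /=; rewrite ?IH; ring. Qed.

Lemma Csum_ext l g g' : (forall n, g n = g' n) -> Csum l g = Csum l g'.
Proof. by move=> H; elim: l => [|n l IH] //=; rewrite IH H. Qed.

Lemma peval_geom_poly a c M z : peval (geom_poly a c M) z =
  Csum (iota 0 M) (fun n => Cmult (Cdiv (Cpow (Copp c) n) (Cpow a n.+1)) (Cpow z n)).
Proof. by rewrite /geom_poly; elim: (iota 0 M) => [|n l IH] //=; rewrite IH. Qed.

Section Decomposition.

Variables (p q : R) (b m : nat) (P : (nat -> C) -> C) (A B : Z).

Definition alpha (xi : nat -> C) := Cminus (RtoC p) (xi m).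

Definition geom_term (e f : Z) (kappa : C) (k : nat) (xi : nat -> C) :=
  Cmult (Cpowz (xi b) e)
    (Cmult (Cmult (Cmult (Cpowz (xi m) f) (P xi)) kappa) (Cpow (Cinv (alpha xi)) k)).

Definition geom_rem (M : nat) (xi : nat -> C) :=
  Copp (Cmult (Cmult (Cmult (Cmult (Cmult (Cmult (Cpowz (xi m) (B + 1 + Z.of_nat M)) (P xi))
    (Cpowz (xi b) (A - 1))) (Cminus (xi m) (xi b))) (Cpow (Copp (Cmult (RtoC q) (xi b))) M))
    (Cpow (Cinv (alpha xi)) M)) (Cinv (Sden p q xi b m))).

(* Expanding [1 / Sden b m = 1 / (alpha + q xi_m xi_b)] geometrically in [xi_b]
   up to order [M]. *)
Lemma Smat_decomposition M xi :
  xi b <> RtoC 0 -> xi m <> RtoC 0 -> alpha xi <> RtoC 0 -> Sden p q xi b m <> RtoC 0 ->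
  Cmult (Cmult (Cmult (Smat p q xi b m) (P xi)) (Cpowz (xi b) A)) (Cpowz (xi m) B) =
  Cplus (Cplus (Cplus (geom_term (A - 1) (B + 1) (Copp (RtoC 1)) 0 xi)
    (fsum (iota 0 M) (fun n => geom_term (A - 1 + Z.of_nat n) (B + 2 + Z.of_nat n)
                                 (Copp (Cpow (Copp (RtoC q)) n)) n.+1) xi))
    (fsum (iota 0 M) (fun n => geom_term (A + Z.of_nat n) (B + 1 + Z.of_nat n)
                                 (Cpow (Copp (RtoC q)) n) n.+1) xi))
    (geom_rem M xi).
Proof.
move=> hu hv ha hD.
set a := alpha xi; set c := Cmult (RtoC q) (xi m).
have HD : Sden p q xi b m = Cplus a (Cmult c (xi b)) by rewrite /Sden /a /alpha /c; ring.
set G := Csum (iota 0 M) (fun n => Cmult (Cdiv (Cpow (Copp c) n) (Cpow a n.+1)) (Cpow (xi b) n)).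
have Hinv : Cinv (Sden p q xi b m) =
    Cplus G (Cdiv (Cpow (Copp (Cmult c (xi b))) M) (Cmult (Cpow a M) (Sden p q xi b m))).
  have hD' : Cplus a (Cmult c (xi b)) <> RtoC 0 by rewrite -HD.
  have := inv_affine_sub_geom_poly M ha hD'.
  by rewrite peval_geom_poly -HD -/G => <-; ring.
have HaM n : Cpow a n <> RtoC 0 by apply: Cpow_neq0.
have HvM n : Cpow (xi m) n <> RtoC 0 by apply: Cpow_neq0.
have Hq n : Cpow (Copp c) n = Cmult (Cpow (Copp (RtoC q)) n) (Cpow (xi m) n).
  by rewrite -Cpow_mult /c; congr Cpow; ring.
have E1 : fsum (iota 0 M) (fun n => geom_term (A - 1 + Z.of_nat n) (B + 2 + Z.of_nat n)
                                     (Copp (Cpow (Copp (RtoC q)) n)) n.+1) xi =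
    Cmult (Copp (Cmult (Cmult (Cmult (Cpowz (xi b) (A - 1)) (Cpowz (xi m) (B + 1))) (P xi)) (xi m))) G.
  rewrite /fsum -Csum_scal; apply: Csum_ext => n.
  rewrite /geom_term -/a (_ : (B + 2 + Z.of_nat n = B + 1 + 1 + Z.of_nat n)%Z); last lia.
  rewrite !Cpowz_add_nat // Cpowz_succ // -Cpow_inv // Hq; cbn [Cpow].
  by field; split.
have E2 : fsum (iota 0 M) (fun n => geom_term (A + Z.of_nat n) (B + 1 + Z.of_nat n)
                                     (Cpow (Copp (RtoC q)) n) n.+1) xi =
    Cmult (Cmult (Cmult (Cmult (Cpowz (xi b) (A - 1)) (Cpowz (xi m) (B + 1))) (P xi)) (xi b)) G.
  rewrite /fsum -Csum_scal; apply: Csum_ext => n.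
  rewrite /geom_term -/a (_ : (A + Z.of_nat n = A - 1 + 1 + Z.of_nat n)%Z); last lia.
  rewrite !Cpowz_add_nat // Cpowz_succ // -Cpow_inv // Hq; cbn [Cpow].
  by field; split.
have HA : Cpowz (xi b) A = Cmult (xi b) (Cpowz (xi b) (A - 1)).
  by rewrite -Cpowz_succ //; congr Cpowz; lia.
have HB : Cpowz (xi m) (B + 1) = Cmult (xi m) (Cpowz (xi m) B) by apply: Cpowz_succ.
rewrite E1 E2 SmatE // Hinv /geom_term /geom_rem -/a Cpowz_add_nat // HA HB -(@Cpow_inv a M ha).
rewrite (_ : Copp (Cmult (RtoC q) (xi b)) = Cmult (Copp (RtoC q)) (xi b)); last ring.
rewrite (_ : Copp (Cmult c (xi b)) = Cmult (Copp (RtoC q)) (Cmult (xi b) (xi m))); last by rewrite /c; ring.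
rewrite !Cpow_mult /=.
by field; repeat split.
Qed.

End Decomposition.

Section LeadingPair.

Variables (N : nat) (p q r : R) (b m : nat) (L2 L3 : seq nat) (H P : (nat -> C) -> C).
Hypotheses (p_pos : 0 < p) (q_pos : 0 < q) (pq1 : p + q = 1).
Hypotheses (r_pos : 0 < r) (r_le_p : r <= p / 4) (r_le_half : r <= 1 / 2).
Hypotheses (b_lt : (b < N)%N) (m_lt : (m < N)%N).
Hypotheses (b_notin : b \notin L2 ++ m :: L3) (m_notin : m \notin L3).
Hypotheses (H_lip : bounded_lipschitz N r H) (H_b : indep b H) (H_m : indep m H).
Hypotheses (P_an : analytic_in N r m P) (P_b : indep b P) (P_L3 : {in L3, forall j, indep j P}).

Let b_neq_m : b <> m.
Proof. by move=> E; move: b_notin; rewrite E mem_cat mem_head orbT. Qed.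

Let b_notin_L3 : b \notin L3.
Proof. by apply: contra b_notin => Hb; rewrite mem_cat inE Hb !orbT. Qed.

Let m_neq_b : m <> b := nesym b_neq_m.

Let m_neq_L3 j : j \in L3 -> m <> j.
Proof. by move=> Hj E; move: m_notin; rewrite E Hj. Qed.

Let b_neq_L3 j : j \in L3 -> b <> j.
Proof. by move=> Hj E; move: b_notin_L3; rewrite E Hj. Qed.

Lemma Cmod_alpha_ge xi : on_torus N r xi -> p / 2 <= Cmod (alpha p m xi).
Proof.
move=> D; rewrite /alpha.
have := Cmod_triangle (Cminus (RtoC p) (xi m)) (xi m).
by rewrite (_ : Cplus _ _ = RtoC p) ?Cmod_RtoC_pos ?D //; [lra | lra | rewrite /Cminus; ring].
Qed.

Lemma analytic_in_alpha_inv : analytic_in N r m (fun xi => Cinv (alpha p m xi)).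
Proof.
apply: (analytic_in_inv_affine r_pos (d := p / 2)); first lra.
- exact: bounded_lipschitz_minus (bounded_lipschitz_const _) (bounded_lipschitz_coord m_lt).
- exact: Cmod_alpha_ge.
move=> xi D; exists (RtoC p), (RtoC (-1)); split; first by move=> E; injection E; lra.
split; first by rewrite (Cmod_RtoC_pos (a := p)) ?Cmod_R ?Rabs_left; lra.
by move=> z _; rewrite /alpha upd_same /Cminus /RtoC /Cplus /Cmult /Copp /=; f_equal; ring.
Qed.

Let alpha_neq0 xi : on_torus N r xi -> alpha p m xi <> RtoC 0.
Proof. by move=> D E; have := Cmod_alpha_ge D; rewrite E Cmod_0; lra. Qed.

Let bounded_lipschitz_alpha_inv := proj1 analytic_in_alpha_inv.

Lemma geom_term_vanishes e f kappa k : (e = -1 -> 0 <= f)%Z ->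
  bounded_lipschitz N r (geom_term p b m P e f kappa k) /\
  vanishes N r b m L2 L3 H (geom_term p b m P e f kappa k).
Proof.
move=> Hef; apply: vanishes_term => //.
- apply: bounded_lipschitz_mult (bounded_lipschitz_Cpow _ bounded_lipschitz_alpha_inv).
  apply: bounded_lipschitz_mult (bounded_lipschitz_const _).
  exact: bounded_lipschitz_mult (bounded_lipschitz_Cpowz_coord r_pos f m_lt) (proj1 P_an).
- by move=> xi z; rewrite P_b /alpha !upd_other.
- by move=> j Hj xi z; rewrite P_L3 // /alpha !upd_other //; apply: m_neq_L3.
move=> /Hef Hf; rewrite /geom_term.
apply: analytic_in_mult (analytic_in_Cpow _ analytic_in_alpha_inv).
apply: analytic_in_mult (analytic_in_const _).
apply: analytic_in_mult P_an.
apply: (analytic_in_ext (analytic_in_Cpow (Z.to_nat f) (analytic_in_coord m_lt))).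
by move=> xi _; rewrite Cpowz_nonneg.
Qed.

Lemma geom_rem_vanishes A B M : (0 <= B + 1 + Z.of_nat M)%Z ->
  bounded_lipschitz N r (geom_rem p q b m P A B M) /\
  vanishes N r b m L2 L3 H (geom_rem p q b m P A B M).
Proof.
move=> HM.
have Hb : forall G, bounded_lipschitz N r G -> indep m G -> analytic_in N r m G
  by move=> G; apply: analytic_in_indep.
have HX : analytic_in N r m (geom_rem p q b m P A B M).
  apply/analytic_in_opp/analytic_in_mult; last exact: analytic_in_Sden_inv.
  apply: analytic_in_mult (analytic_in_Cpow _ analytic_in_alpha_inv).
  apply: analytic_in_mult.
    apply: analytic_in_mult.
      apply: analytic_in_mult; last first.
        by apply: Hb (bounded_lipschitz_Cpowz_coord r_pos _ b_lt) _ => xi z; rewrite upd_other.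
      apply: analytic_in_mult P_an.
      apply: (analytic_in_ext (analytic_in_Cpow (Z.to_nat (B + 1 + Z.of_nat M)) (analytic_in_coord m_lt))).
      by move=> xi _; rewrite Cpowz_nonneg.
    apply: analytic_in_plus (analytic_in_coord m_lt) _.
    by apply: Hb (bounded_lipschitz_opp (bounded_lipschitz_coord b_lt)) _ => xi z; rewrite upd_other.
  apply: Hb => [|xi z]; last by rewrite upd_other.
  apply/bounded_lipschitz_Cpow/bounded_lipschitz_opp.
  exact: bounded_lipschitz_mult (bounded_lipschitz_const _) (bounded_lipschitz_coord b_lt).
split; first by case: HX.
apply: vanishes_analytic_m => // j Hj xi z.
have hmj := m_neq_L3 Hj; have hbj := b_neq_L3 Hj.
by rewrite /geom_rem /Sden /alpha P_L3 // !upd_other.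
Qed.

Lemma leading_pair_vanishes A B : (A <= B)%Z ->
  vanishes N r b m L2 L3 H (fun xi =>
    Cmult (Cmult (Cmult (Smat p q xi b m) (P xi)) (Cpowz (xi b) A)) (Cpowz (xi m) B)).
Proof.
move=> AB; set M := Z.to_nat (- (B + 1)).
(* Since [A <= B], the power of [xi m] is nonnegative in every term whose power
   of [xi b] is [-1]; [M] makes it nonnegative in the remainder. *)
have [G1 Z1] := @geom_term_vanishes (A - 1) (B + 1) (Copp (RtoC 1)) 0 ltac:(lia).
have [G2 Z2] := vanishes_fsum r_pos H_lip (l := iota 0 M) (fun n _ =>
  @geom_term_vanishes (A - 1 + Z.of_nat n) (B + 2 + Z.of_nat n) (Copp (Cpow (Copp (RtoC q)) n)) n.+1 ltac:(lia)).
have [G3 Z3] := vanishes_fsum r_pos H_lip (l := iota 0 M) (fun n _ =>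
  @geom_term_vanishes (A + Z.of_nat n) (B + 1 + Z.of_nat n) (Cpow (Copp (RtoC q)) n) n.+1 ltac:(lia)).
have [G4 Z4] := @geom_rem_vanishes A B M ltac:(lia).
apply: (vanishes_ext r_pos _ (fun xi D => esym (Smat_decomposition P A B M
  (on_torus_neq0 r_pos b_lt D) (on_torus_neq0 r_pos m_lt D) (alpha_neq0 D)
  (Sden_neq0 p_pos q_pos pq1 r_pos r_le_p r_le_half b_lt m_lt D)))).
have G12 := bounded_lipschitz_plus G1 G2.
apply: (vanishes_plus r_pos H_lip _ G4 _ Z4); first exact: bounded_lipschitz_plus G12 G3.
apply: (vanishes_plus r_pos H_lip G12 G3 _ Z3).
exact: (vanishes_plus r_pos H_lip G1 G2 Z1 Z2).
Qed.

End LeadingPair.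

(** * The permutation *)

Lemma Cprod_filterC (T : Type) (l : seq T) (a : pred T) (g : T -> C) :
  Cprod [seq g x | x <- l] =
  Cmult (Cprod [seq g x | x <- l & a x]) (Cprod [seq g x | x <- l & ~~ a x]).
Proof. by elim: l => [|x l IH] /=; [|case: (a x) => /=; rewrite IH]; ring. Qed.

Lemma mem_inv_pos N (s : 'S_N) (ij : 'I_N * 'I_N) :
  (ij \in inv_pos s) = (ij.1 < ij.2)%N && (s ij.2 < s ij.1)%N.
Proof.
rewrite /inv_pos mem_filter; apply: andb_idr => _.
by case: ij => a c; apply: (@allpairs_f _ _ _ pair); rewrite mem_enum.
Qed.

Lemma uniq_inv_pos N (s : 'S_N) : uniq (inv_pos s).
Proof. by apply/filter_uniq/allpairs_uniq => //; [apply: enum_uniq | apply: enum_uniq | case=> ? ? [? ?]]. Qed.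

Definition inv_into N (s : 'S_N) (k i : 'I_N) :=
  [seq ij <- [seq ij <- inv_pos s | ij.2 == k] | ij.1 != i].

Definition inv_avoid N (s : 'S_N) (k : 'I_N) := [seq ij <- inv_pos s | ij.2 != k].

Definition pos_except N (i k : 'I_N) := [seq j <- [seq j <- enum 'I_N | j != i] | j != k].

Section Split.

Variables (N : nat) (p q : R) (x y : 'I_N -> Z) (s : 'S_N) (i k : 'I_N).

Definition Smat_prod (l : seq ('I_N * 'I_N)) (xi : nat -> C) :=
  Cprod [seq Smat p q xi (s ij.1) (s ij.2) | ij <- l].

Definition spectator (xi : nat -> C) :=
  Cmult (Smat_prod (inv_avoid s k) xi)
        (Cprod [seq Cpowz (xi (s j)) (x j - y (s j) - 1) | j <- pos_except i k]).

Lemma integrand_split xi : (i < k)%N -> (s k < s i)%N ->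
  integrand p q x y s xi =
  Cmult (Cmult (Cmult (Cmult (Smat p q xi (s i) (s k)) (Smat_prod (inv_into s k i) xi))
    (Cpowz (xi (s i)) (x i - y (s i) - 1))) (Cpowz (xi (s k)) (x k - y (s k) - 1)))
    (spectator xi).
Proof.
move=> ik sk; have i_neq_k : i != k by rewrite neq_ltn ik.
rewrite /integrand /Asig /spectator /Smat_prod.
rewrite (Cprod_filterC _ (fun ij => ij.2 == k)) (Cprod_filterC [seq ij <- _ | _] (fun ij => ij.1 == i)).
have -> : [seq ij <- [seq ij <- inv_pos s | ij.2 == k] | ij.1 == i] = [:: (i, k)].
  rewrite -filter_predI (@eq_filter _ _ (pred1 (i, k))); last first.
    by move=> [a c] /=; rewrite xpair_eqE andbC.
  by apply: filter_pred1_uniq; [exact: uniq_inv_pos | rewrite mem_inv_pos /= ik].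
rewrite (Cprod_filterC (enum 'I_N) (fun j => j == i)).
rewrite (Cprod_filterC [seq j <- enum 'I_N | j != i] (fun j => j == k)).
have -> : [seq j <- enum 'I_N | j == i] = [:: i] by apply: filter_pred1_uniq; rewrite ?enum_uniq ?mem_enum.
have -> : [seq j <- [seq j <- enum 'I_N | j != i] | j == k] = [:: k].
  by apply: filter_pred1_uniq; [exact/filter_uniq/enum_uniq | rewrite mem_filter mem_enum andbT eq_sym].
rewrite /inv_into /inv_avoid /pos_except /=; ring.
Qed.

End Split.

Lemma rev_iota_split (N m b : nat) : (m < b)%N -> (b < N)%N ->
  rev (iota 0 N) =
  rev (iota b.+1 (N - b.+1)) ++ b :: rev (iota m.+1 (b - m.+1)) ++ m :: rev (iota 0 m).
Proof.
move=> hmb hbN.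
rewrite {1}(_ : N = m + (1 + (b - m.+1 + (1 + (N - b.+1)))))%N; last lia.
rewrite !iotaD !add0n (_ : (m + 1 + (b - m.+1))%N = b); last lia.
by rewrite !addn1 !rev_cat /= -!catA.
Qed.

Section PairVanishing.

Variables (N : nat) (p q r : R) (x y : 'I_N -> Z) (s : 'S_N) (i k : 'I_N).
Hypotheses (p_pos : 0 < p) (q_pos : 0 < q) (pq1 : p + q = 1).
Hypotheses (r_pos : 0 < r) (r_le_p : r <= p / 4) (r_le_half : r <= 1 / 2).
Hypotheses (ik : (i < k)%N) (sk : (s k < s i)%N).
Hypothesis only_inv_from_i :
  forall j1 j2 : 'I_N, (j1 < j2)%N -> (s j2 < s j1)%N -> j1 = i -> j2 = k.
Hypothesis no_inv_from_k : forall j1 j2 : 'I_N, (j1 < j2)%N -> (s j2 < s j1)%N -> j1 <> k.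
Hypothesis no_inv_into_i : forall j1 j2 : 'I_N, (j1 < j2)%N -> (s j2 < s j1)%N -> j2 <> i.

Let b : nat := s i.
Let m : nat := s k.
Let L3 := rev (iota 0 m).
Let L2 := rev (iota m.+1 (b - m.+1)).

Let b_lt : (b < N)%N := ltn_ord (s i).
Let m_lt : (m < N)%N := ltn_ord (s k).

Let val_b (j : 'I_N) : (s j : nat) = b -> j = i.
Proof. by move=> E; apply: (@perm_inj _ s); apply: val_inj. Qed.

Let val_m (j : 'I_N) : (s j : nat) = m -> j = k.
Proof. by move=> E; apply: (@perm_inj _ s); apply: val_inj. Qed.

Let mem_L3 j : (j \in L3) = (j < m)%N.
Proof. by rewrite /L3 mem_rev mem_iota add0n. Qed.

Let b_notin : b \notin L2 ++ m :: L3.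
Proof.
rewrite mem_cat inE mem_L3 /L2 mem_rev mem_iota (_ : (m.+1 + (b - m.+1))%N = b); last lia.
by rewrite ltnn andbF /= ltnNge ltnW //; case: eqP => // E; move: sk; rewrite -/m -/b E ltnn.
Qed.

Let m_notin : m \notin L3.
Proof. by rewrite mem_L3 ltnn. Qed.

Let P := Smat_prod p q s (inv_into s k i).
Let H := spectator p q x y s i k.

Let mem_inv_into ij : ij \in inv_into s k i -> [/\ ij.2 = k, ij.1 <> i & (m < s ij.1)%N].
Proof.
rewrite 2!mem_filter mem_inv_pos => /andP [H1 /andP [/eqP H2 /andP [_ H4]]].
by split => //; [apply/eqP | rewrite /m -H2].
Qed.

Let mem_inv_avoid ij : ij \in inv_avoid s k ->
  [/\ (s ij.1 : nat) <> b, (s ij.1 : nat) <> m, (s ij.2 : nat) <> b & (s ij.2 : nat) <> m].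
Proof.
rewrite mem_filter mem_inv_pos => /andP [/eqP H1 /andP [H3 H4]]; split.
- by move=> /val_b E; apply: H1; apply: (only_inv_from_i H3 H4).
- by move=> /val_m E; apply: (no_inv_from_k H3 H4).
- by move=> /val_b E; apply: (no_inv_into_i H3 H4).
- by move=> /val_m E; apply: H1.
Qed.

Let mem_pos_except j : j \in pos_except i k -> (s j : nat) <> b /\ (s j : nat) <> m.
Proof.
rewrite !mem_filter => /andP [/eqP H1 /andP [/eqP H2 _]].
by split; [move=> /val_b | move=> /val_m].
Qed.

Lemma analytic_in_inv_into : analytic_in N r m P.
Proof.
apply: analytic_in_Cprod => ij /mem_inv_into [E1 E2 E3]; rewrite E1.
by apply: analytic_in_Smat => // E; move: E3; rewrite E ltnn.
Qed.

Lemma indep_inv_into j : j = b \/ (j < m)%N -> indep j P.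
Proof.
move=> Hj xi z; rewrite /P /Smat_prod; congr Cprod; apply/eq_in_map => ij /mem_inv_into [E1 E2 E3].
have Hjm : j <> m by case: Hj => [->|/ltn_eqF/eqP //]; apply/eqP; rewrite eqn_leq leqNgt sk.
rewrite indep_Smat // ?E1 // => E.
case: Hj => [Ejb|Hjm']; first by apply: E2; apply: val_b; rewrite -E.
by move: (ltn_trans Hjm' E3); rewrite -E ltnn.
Qed.

Lemma bounded_lipschitz_spectator : bounded_lipschitz N r H.
Proof.
apply: bounded_lipschitz_mult; apply: bounded_lipschitz_Cprod => *.
  exact: bounded_lipschitz_Smat (ltn_ord _) (ltn_ord _).
by apply: (bounded_lipschitz_Cpowz_coord r_pos _ (ltn_ord _)).
Qed.

Lemma indep_spectator j : j = b \/ j = m -> indep j H.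
Proof.
move=> Hj xi z; rewrite /H /spectator /Smat_prod; congr Cmult; congr Cprod; apply/eq_in_map.
- move=> ij /mem_inv_avoid [E1 E2 E3 E4]; rewrite indep_Smat //.
    by case: Hj => ->; auto.
  by case: Hj => ->; auto.
- move=> j' /mem_pos_except [E1 E2]; rewrite upd_other //.
  by case: Hj => ->; auto.
Qed.

Lemma Isig_pair_vanishes : (x i <= x k)%Z -> (y (s k) <= y (s i))%Z -> Isig p q x y s r = RtoC 0.
Proof.
move=> x_le y_le; rewrite /Isig.
set xi0 : nat -> C := fun j => if (j < N)%N then RtoC r else RtoC 0.
have D0 : on_torus N r xi0 by move=> j hj; rewrite /xi0 hj Cmod_RtoC_pos //; lra.
rewrite (circ_iter_agree r _ (xi' := xi0)); last first.
  by move=> j; rewrite mem_rev mem_iota add0n /= /xi0; case: (j < N)%N.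
rewrite (rev_iota_split sk b_lt) circ_iter_cat; apply: (@circ_iter_0 N r r_pos _ _ _ _ D0) => xi D.
have -> : integrand p q x y s = fun xi =>
    Cmult (Cmult (Cmult (Cmult (Smat p q xi b m) (P xi)) (Cpowz (xi b) (x i - y (s i) - 1)))
          (Cpowz (xi m) (x k - y (s k) - 1))) (H xi).
  by apply: functional_extensionality => xi'; rewrite (integrand_split _ _ _ _ xi' ik sk).
apply: (leading_pair_vanishes p_pos q_pos pq1 r_pos r_le_p r_le_half b_lt m_lt b_notin m_notin) => //.
- exact: bounded_lipschitz_spectator.
- by apply: indep_spectator; left.
- by apply: indep_spectator; right.
- exact: analytic_in_inv_into.
- by apply: indep_inv_into; left.
- by move=> j; rewrite mem_L3 => Hj; apply: indep_inv_into; right.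
- lia.
Qed.

End PairVanishing.

(* Pigeonhole: the [i] entries before position [i] miss exactly one value
   below [b = i + 1]. *)
Lemma prefix_gap N (s : 'S_N) (i b : 'I_N) : i.+1 = b -> s i = b ->
  (forall j : 'I_N, (j < i)%N -> (s j < b)%N) ->
  exists k : 'I_N, [/\ (i < k)%N, (s k < b)%N &
    forall j : 'I_N, (i < j)%N -> (s j < b)%N -> j = k].
Proof.
move=> ib si before.
pose pos j : 'I_N := insubd i j.
have posK j : (j < N)%N -> nat_of_ord (pos j) = j by move=> Hj; rewrite val_insubd Hj.
have lt_N j : (j < i)%N -> (j < N)%N by move=> Hj; apply: ltn_trans Hj (ltn_ord i).
set vals := [seq (s (pos j) : nat) | j <- iota 0 i].
have val_lt v : v \in vals -> (v < b)%N.
  case/mapP => j; rewrite mem_iota add0n => /= Hj ->.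
  by apply: before; rewrite posK // lt_N.
have vals_uniq : uniq vals.
  rewrite map_inj_in_uniq ?iota_uniq // => j1 j2; rewrite !mem_iota !add0n /= => H1 H2.
  by move/val_inj/perm_inj/(f_equal val); rewrite /= !posK // lt_N.
have [v Hv Hvn] : exists2 v, v \in iota 0 b & v \notin vals.
  apply/hasP; apply/negPn/negP => /hasPn Hn.
  have := uniq_leq_size (iota_uniq 0 b) (fun v Hv => negbNE (Hn v Hv)).
  by rewrite size_iota size_map size_iota -ib ltnn.
rewrite mem_iota add0n in Hv.
have hvN : (v < N)%N := ltn_trans Hv (ltn_ord b).
set k := (s^-1)%g (Ordinal hvN).
have sk : (s k : nat) = v by rewrite /k permKV.
have in_vals (j : 'I_N) : (j < i)%N -> (s j : nat) \in vals.
  move=> Hj; apply/mapP; exists (nat_of_ord j); first by rewrite mem_iota.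
  by congr (nat_of_ord (s _)); apply: val_inj; rewrite /= posK // lt_N.
have ik : (i < k)%N.
  case: ltngtP => // [/in_vals | /val_inj E]; first by rewrite sk (negbTE Hvn).
  by move: Hv; rewrite -sk -E si ltnn.
exists k; split => //; first by rewrite sk.
move=> j ij sj; apply/eqP/negPn/negP => jk.
have Hu : uniq ((s j : nat) :: v :: vals).
  rewrite cons_uniq inE negb_or cons_uniq Hvn vals_uniq !andbT; apply/andP; split.
    by apply/eqP => E; move/eqP: jk; apply; apply: (@perm_inj _ s); apply: val_inj; rewrite /= E sk.
  apply/negP => /mapP [j' Hj' E]; rewrite mem_iota add0n /= in Hj'.
  have E2 : j = pos j' by apply: (@perm_inj _ s); apply: val_inj.
  by move: ij; rewrite E2 posK ?lt_N // => /(ltn_trans Hj'); rewrite ltnn.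
have Hsub : {subset (s j : nat) :: v :: vals <= iota 0 b}.
  by move=> w; rewrite !inE mem_iota add0n => /orP [/eqP ->|/orP [/eqP ->|/val_lt]].
by have := uniq_leq_size Hu Hsub; rewrite /= size_map !size_iota -ib ltnS ltnn.
Qed.

Theorem lemma3p3 (N : nat) (p q : R) (x y : 'I_N -> Z) (s : 'S_N) :
  (2 <= N)%N -> 0 < p -> 0 < q -> p + q = 1 ->
  (forall i j : 'I_N, (i <= j)%N -> (x i <= x j)%Z) ->
  (forall i j : 'I_N, (i <= j)%N -> (y i <= y j)%Z) ->
  (exists (b i : 'I_N), i.+1 = b /\ s i = b /\
      forall j : 'I_N, (j < i)%N -> (s j < b)%N) ->
  exists r0 : R, 0 < r0 /\
    forall r : R, 0 < r -> r < r0 -> Isig p q x y s r = RtoC 0.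
Proof.
move=> _ hp hq hpq x_mono y_mono [b [i [ib [si before]]]].
have [k [ik sk k_uniq]] := prefix_gap ib si before.
exists (Rmin (p / 4) (1 / 2)); split; first by apply: Rmin_glb_lt; lra.
move=> r hr hr0; have := Rmin_l (p / 4) (1 / 2); have := Rmin_r (p / 4) (1 / 2).
move=> r_half r_p; rewrite -si in sk.
apply: (Isig_pair_vanishes hp hq hpq hr _ _ ik sk); try lra.
- by move=> j1 j2 j12 sj E; subst j1; apply: k_uniq; rewrite -?si.
- move=> j1 j2 j12 sj E; subst j1.
  have sj2 : (s j2 < b)%N by rewrite -si; apply: ltn_trans sj sk.
  have E := k_uniq j2 (ltn_trans ik j12) sj2.
  by move: j12; rewrite E ltnn.
- move=> j1 j2 j12 sj E; subst j2.
  by move: (before j1 j12); rewrite -si => /(ltn_trans sj); rewrite ltnn.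
- exact/x_mono/ltnW.
- exact/y_mono/ltnW.
Qed.
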